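(* Let $s\in\{+1,-1\}$ and $d\ge1$. Let $f:\mathbb T^d\to\mathbb R$ be continuous, even and nonzero, with $\widehat f\in\ell^1(\mathbb Z^d)$. Suppose there exist $r_f\in(0,1]$ and an integer $k\ge1$ such that $f(x)\ge0$ whenever $d_\infty(x,0)\ge r_f$, $\widehat f(0)\le0$, $s\widehat f(m)\ge0$ whenever $\max_j|m_j|\ge k$, and $sf(0)\le0$. Then $$r_f\,(2k-1)\ \ge\ 2^{-(1+4/d)}.$$
   Context: $\mathbb T^d=\mathbb R^d/\mathbb Z^d$ identified with $[-\tfrac12,\tfrac12]^d$, Haar probability measure $\lambda$; $\widehat f(m)=\int_{\mathbb T^d}f(x)e^{-2\pi i\langle x,m\rangle}d\lambda(x)$. $d_\infty(x,y)=\max_{1\le j\le d}|x_j-y_j|$, where $|t|$ denotes the distance from $t$ to $0$ in $\mathbb T^1=\mathbb R/\mathbb Z$. *)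

From Stdlib Require Import Reals Lra Lia ZArith ClassicalEpsilon.
Open Scope R_scope.

(* Points of R^d are modelled as x : nat -> R, only coordinates j < d matter. *)
Definition updR (x : nat -> R) (j : nat) (t : R) : nat -> R :=
  fun i => if Nat.eqb i j then t else x i.
Definition updZ (m : nat -> Z) (j : nat) (k : Z) : nat -> Z :=
  fun i => if Nat.eqb i j then k else m i.

(* One-dimensional Riemann integral of h over [a,b] (value of RiemannInt
   when h is Riemann integrable; unspecified otherwise). *)
Definition Rint (h : R -> R) (a b : R) : R :=
  epsilon (inhabits 0) (fun I => exists pr : Riemann_integrable h a b, RiemannInt pr = I).

Fixpoint integ (n : nat) (g : (nat -> R) -> R) (x : nat -> R) : R :=
  match n with
  | O => g x
  | S n' => Rint (fun t => integ n' g (updR x n' t)) (-(1/2)) (1/2)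
  end.

(* Integral over T^d = [-1/2,1/2]^d against Haar probability measure. *)
Definition torus_int (d : nat) (g : (nat -> R) -> R) : R := integ d g (fun _ => 0).

Fixpoint dot (d : nat) (x : nat -> R) (m : nat -> Z) : R :=
  match d with
  | O => 0
  | S d' => dot d' x m + x d' * IZR (m d')
  end.

(* Fourier coefficient  \hat f(m) = fhat_re + i * fhat_im *)
Definition fhat_re (d : nat) (f : (nat -> R) -> R) (m : nat -> Z) : R :=
  torus_int d (fun x => f x * cos (2 * PI * dot d x m)).
Definition fhat_im (d : nat) (f : (nat -> R) -> R) (m : nat -> Z) : R :=
  - torus_int d (fun x => f x * sin (2 * PI * dot d x m)).
Definition fhat_abs (d : nat) (f : (nat -> R) -> R) (m : nat -> Z) : R :=
  sqrt (fhat_re d f m ^ 2 + fhat_im d f m ^ 2).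

(* Sum of F over m in the box [-N,N]^n (coordinates 0..n-1), others from m. *)
Fixpoint boxsum (n N : nat) (F : (nat -> Z) -> R) (m : nat -> Z) : R :=
  match n with
  | O => F m
  | S n' => sum_f_R0 (fun i => boxsum n' N F (updZ m n' (Z.of_nat i - Z.of_nat N)%Z)) (2 * N)
  end.

(* \hat f \in l^1(Z^d) : partial sums of |\hat f| over boxes are bounded. *)
Definition fhat_l1 (d : nat) (f : (nat -> R) -> R) : Prop :=
  exists B : R, forall N : nat, boxsum d N (fhat_abs d f) (fun _ => 0%Z) <= B.

(* Functions on T^d: depend only on first d coordinates, 1-periodic in each. *)
Definition torus_fun (d : nat) (f : (nat -> R) -> R) : Prop :=
  (forall x y, (forall j, (j < d)%nat -> x j = y j) -> f x = f y) /\
  (forall x j, (j < d)%nat -> f (updR x j (x j + 1)) = f x).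

Definition torus_continuous (d : nat) (f : (nat -> R) -> R) : Prop :=
  forall x eps, 0 < eps -> exists delta, 0 < delta /\
    forall y, (forall j, (j < d)%nat -> Rabs (y j - x j) < delta) -> Rabs (f y - f x) < eps.

Definition even_fun (f : (nat -> R) -> R) : Prop :=
  forall x, f (fun j => - x j) = f x.

(* |t| = distance from t to 0 in R/Z *)
Definition tdist (t : R) : R := Rmin (frac_part t) (1 - frac_part t).

Definition dinf0_ge (d : nat) (x : nat -> R) (r : R) : Prop :=
  exists j, (j < d)%nat /\ tdist (x j) >= r.

Definition maxabs_ge (d : nat) (m : nat -> Z) (k : nat) : Prop :=
  exists j, (j < d)%nat /\ (Z.abs (m j) >= Z.of_nat k)%Z.

From Stdlib Require Import Reals ZArith Lra Lia ClassicalEpsilon Classical FunctionalExtensionality.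
From Coquelicot Require Import Coquelicot.
Open Scope R_scope.

(* Let I be the integral of |f|. Compare the Fejér means of f at x and at 0 mode by mode:
   the modes with max_j |m_j| >= k contribute with the sign s, each of the (2k-1)^d others
   by at most I. Letting N grow gives f(x) >= - s f(0) - 2 I (2k-1)^d >= - 2 I (2k-1)^d.
   As f >= 0 outside the cube of half-side r and the integral of f is fhat(0) <= 0,
   I = int f + 2 int f^- <= 4 I (2k-1)^d (2r)^d, and I > 0 since Fejér means of f would
   otherwise vanish. So (2r(2k-1))^d >= 1/4, i.e. r(2k-1) >= 2^-(1+2/d), better than claimed. *)

Lemma continuity_pt_iff (h : R -> R) t :
  continuity_pt h t <->
  forall eps, 0 < eps -> exists del, 0 < del /\
    forall u, Rabs (u - t) < del -> Rabs (h u - h t) < eps.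
Proof.
  split.
  - intros Hc eps He. destruct (Hc eps He) as [del [Hd H]].
    exists del; split; auto. intros u Hu.
    destruct (Req_dec u t) as [->|Hne].
    + rewrite Rminus_diag, Rabs_R0; auto.
    + apply (H u). repeat split; auto.
  - intros H eps He. destruct (H eps He) as [del [Hd H2]].
    exists del; split; auto. intros u [_ Hu]. apply H2, Hu.
Qed.

Lemma continuity_pt_constant (c t : R) : continuity_pt (fun _ => c) t.
Proof. apply continuity_pt_const. intros ? ?; reflexivity. Qed.

Lemma continuity_pt_cos_linear (a b t : R) :
  continuity_pt (fun u => cos (2 * PI * (u * a) + b)) t.
Proof.
  apply continuity_pt_comp with (f1 := fun u => 2 * PI * (u * a) + b). reg. apply continuity_cos.
Qed.

Lemma continuity_pt_sum (F : nat -> R -> R) M t :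
  (forall i, continuity_pt (F i) t) -> continuity_pt (fun u => sum_f_R0 (fun i => F i u) M) t.
Proof. intros HF. induction M; simpl. apply HF. apply continuity_pt_plus; auto. Qed.

(* Compactness of [a, b]: the supremum of the [v] with [S a v] cannot stop before [b]. *)
Lemma interval_local_to_global (a b : R) (S : R -> R -> Prop) :
  a <= b ->
  (forall u v w, S u v -> S v w -> S u w) ->
  (forall t, a <= t <= b -> exists del, 0 < del /\
     forall u v, t - del < u -> v < t + del -> S u v) ->
  S a b.
Proof.
  intros Hab Hglue Hloc.
  set (E := fun v => a <= v <= b /\ S a v).
  assert (Ea : E a).
  { split. lra. destruct (Hloc a (conj (Rle_refl a) Hab)) as [del [Hd H]]. apply H; lra. }
  assert (Hb : bound E) by (exists b; intros v [Hv _]; lra).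
  destruct (completeness E Hb (ex_intro _ a Ea)) as [c [Hub Hlub]].
  assert (Hac : a <= c) by (apply Hub; auto).
  assert (Hcb : c <= b) by (apply Hlub; intros v [Hv _]; lra).
  destruct (Hloc c (conj Hac Hcb)) as [del [Hd Hl]].
  destruct (classic (exists v0, E v0 /\ c - del < v0)) as [[v0 [[Hv0 Sv0] Hv0c]]|Hn].
  2:{ exfalso. assert (c <= c - del); [|lra].
      apply Hlub. intros v Ev. destruct (Rle_dec v (c - del)); auto.
      exfalso; apply Hn; exists v; split; auto; lra. }
  set (w := Rmin b (c + del / 2)).
  assert (Hw : a <= w <= b /\ w < c + del)
    by (unfold w, Rmin; destruct (Rle_dec b (c + del/2)); lra).
  assert (Ew : E w).
  { split; [lra|]. apply Hglue with v0; auto. apply Hl; lra. }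
  assert (Hwc : w <= c) by (apply Hub; auto).
  assert (Hwb : w = b) by (unfold w, Rmin in *; destruct (Rle_dec b (c + del/2)); lra).
  rewrite <- Hwb. apply Ew.
Qed.

(** * Integrals over [-1/2, 1/2] *)

Definition Ihalf (h : R -> R) : R := Rint h (-(1/2)) (1/2).

Lemma ex_RInt_continuity (h : R -> R) a b :
  (forall t, continuity_pt h t) -> ex_RInt h a b.
Proof.
  intros Hc. apply (ex_RInt_continuous (V:=R_CompleteNormedModule)). intros z _.
  apply continuity_pt_filterlim, Hc.
Qed.

Lemma Ihalf_RInt h : (forall t, continuity_pt h t) -> Ihalf h = RInt h (-(1/2)) (1/2).
Proof.
  intros Hc. assert (pr : Riemann_integrable h (-(1/2)) (1/2))
    by (apply continuity_implies_RiemannInt; auto; lra).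
  unfold Ihalf, Rint.
  destruct (epsilon_spec (inhabits 0)
    (fun I => exists pr : Riemann_integrable h (-(1/2)) (1/2), RiemannInt pr = I)
    (ex_intro _ (RiemannInt pr) (ex_intro _ pr eq_refl))) as [pr' <-].
  symmetry. apply RInt_Reals.
Qed.

Lemma Ihalf_lin h1 h2 u v :
  (forall t, continuity_pt h1 t) -> (forall t, continuity_pt h2 t) ->
  Ihalf (fun t => u * h1 t + v * h2 t) = u * Ihalf h1 + v * Ihalf h2.
Proof.
  intros H1 H2.
  assert (X1 := ex_RInt_continuity h1 (-(1/2)) (1/2) H1).
  assert (X2 := ex_RInt_continuity h2 (-(1/2)) (1/2) H2).
  rewrite !Ihalf_RInt; auto.
  2:{ intros t. apply continuity_pt_plus; apply continuity_pt_mult; auto;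
      apply continuity_pt_constant. }
  assert (E1 : RInt (fun t => u * h1 t) (-(1/2)) (1/2) = u * RInt h1 (-(1/2)) (1/2))
    by exact (RInt_scal (V:=R_CompleteNormedModule) h1 _ _ u X1).
  assert (E2 : RInt (fun t => v * h2 t) (-(1/2)) (1/2) = v * RInt h2 (-(1/2)) (1/2))
    by exact (RInt_scal (V:=R_CompleteNormedModule) h2 _ _ v X2).
  rewrite <- E1, <- E2.
  exact (RInt_plus (V:=R_CompleteNormedModule) _ _ _ _
           (ex_RInt_scal (V:=R_CompleteNormedModule) h1 _ _ u X1)
           (ex_RInt_scal (V:=R_CompleteNormedModule) h2 _ _ v X2)).
Qed.

Lemma Ihalf_le h1 h2 :
  (forall t, continuity_pt h1 t) -> (forall t, continuity_pt h2 t) ->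
  (forall t, -(1/2) <= t <= 1/2 -> h1 t <= h2 t) -> Ihalf h1 <= Ihalf h2.
Proof.
  intros H1 H2 H. rewrite !Ihalf_RInt; auto.
  apply RInt_le; try apply ex_RInt_continuity; auto; [lra|].
  intros t Ht; apply H; lra.
Qed.

Lemma Ihalf_const c : Ihalf (fun _ => c) = c.
Proof.
  rewrite Ihalf_RInt by (intros; apply continuity_pt_constant).
  rewrite RInt_const. unfold scal; simpl; unfold mult; simpl. field.
Qed.

Lemma Ihalf_sum (F : nat -> R -> R) M : (forall i t, continuity_pt (F i) t) ->
  Ihalf (fun t => sum_f_R0 (fun i => F i t) M) = sum_f_R0 (fun i => Ihalf (F i)) M.
Proof.
  intros HF. induction M. reflexivity. simpl. rewrite <- IHM.
  transitivity (Ihalf (fun t => 1 * sum_f_R0 (fun i => F i t) M + 1 * F (S M) t)).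
  - f_equal; apply functional_extensionality; intros; ring.
  - rewrite Ihalf_lin. ring. intros; apply continuity_pt_sum; auto. auto.
Qed.

(* The primitive [sin(2 pi v t + phi) / (2 pi v)] takes the same value at
   [t = 1/2] and [t = -1/2] because [v] is an integer. *)
Lemma Ihalf_cos (v : Z) phi :
  Ihalf (fun t => cos (2*PI*(t*IZR v) + phi)) = if Z.eqb v 0 then cos phi else 0.
Proof.
  rewrite Ihalf_RInt by (intros; apply continuity_pt_cos_linear).
  destruct (Z.eqb_spec v 0) as [->|Hv].
  - rewrite (RInt_ext _ (fun _ => cos phi)).
    + rewrite RInt_const. unfold scal; simpl; unfold mult; simpl. field.
    + intros. f_equal. simpl. ring.
  - assert (HvR : IZR v <> 0) by (apply not_0_IZR; auto).
    assert (HPI := PI_neq0).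
    apply is_RInt_unique.
    replace 0 with (minus (sin (2*PI*(1/2*IZR v) + phi) / (2*PI*IZR v))
                          (sin (2*PI*(-(1/2)*IZR v) + phi) / (2*PI*IZR v))).
    2:{ unfold minus, plus, opp; simpl.
        replace (2*PI*(1/2*IZR v) + phi) with (phi + IZR v * PI) by field.
        replace (2*PI*(-(1/2)*IZR v) + phi) with (phi - IZR v * PI) by field.
        rewrite sin_plus, sin_minus, (sin_eq_0_1 (IZR v * PI)) by (exists v; auto).
        field; auto. }
    apply (is_RInt_derive (V:=R_CompleteNormedModule)
             (fun t => sin (2*PI*(t*IZR v) + phi) / (2*PI*IZR v))).
    + intros x _. auto_derive; auto. field; auto.
    + intros x _. apply continuity_pt_filterlim, continuity_pt_cos_linear.
Qed.

(** * Continuity on the torus *)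

Definition continuous2 (F : R -> R -> R) : Prop :=
  forall a b eps, 0 < eps -> exists del, 0 < del /\ forall a' b',
    Rabs (a' - a) < del -> Rabs (b' - b) < del -> Rabs (F a' b' - F a b) < eps.

Lemma continuous2_plus : continuous2 Rplus.
Proof.
  intros a b eps He. exists (eps/2). split. lra. intros a' b' Ha Hb.
  replace (a' + b' - (a + b)) with ((a' - a) + (b' - b)) by ring.
  eapply Rle_lt_trans. apply Rabs_triang. lra.
Qed.

Lemma continuous2_mult : continuous2 Rmult.
Proof.
  intros a b eps He.
  set (D := Rabs a + Rabs b + 2).
  pose proof (Rabs_pos a). pose proof (Rabs_pos b).
  assert (HD : 0 < D) by (unfold D; lra).
  set (del := Rmin 1 (eps / D)).
  assert (Hdel : 0 < del) by (apply Rmin_pos; [lra | apply Rdiv_lt_0_compat; auto]).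
  assert (Hdel1 : del <= 1) by apply Rmin_l.
  assert (HdelD : del * D <= eps).
  { apply Rle_trans with (eps / D * D). apply Rmult_le_compat_r; [lra | apply Rmin_r].
    right; field; lra. }
  exists del. split; auto. intros a' b' Ha Hb.
  replace (a' * b' - a * b) with ((a' - a) * (b' - b) + (a' - a) * b + a * (b' - b)) by ring.
  eapply Rle_lt_trans. apply Rabs_triang.
  eapply Rle_lt_trans. apply Rplus_le_compat_r, Rabs_triang.
  rewrite !Rabs_mult.
  pose proof (Rabs_pos (a' - a)). pose proof (Rabs_pos (b' - b)).
  unfold D in HdelD. nra.
Qed.

Section TorusContinuity.
Variable d : nat.

Lemma torus_continuous_op2 (F : R -> R -> R) g1 g2 : continuous2 F ->
  torus_continuous d g1 -> torus_continuous d g2 ->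
  torus_continuous d (fun y => F (g1 y) (g2 y)).
Proof.
  intros HF H1 H2 x eps He.
  destruct (HF (g1 x) (g2 x) eps He) as [del [Hd HF']].
  destruct (H1 x del Hd) as [d1 [Hd1 H1']].
  destruct (H2 x del Hd) as [d2 [Hd2 H2']].
  exists (Rmin d1 d2). split. apply Rmin_pos; auto.
  intros y Hy. pose proof (Rmin_l d1 d2). pose proof (Rmin_r d1 d2).
  apply HF'; [apply H1' | apply H2']; intros j Hj; specialize (Hy j Hj); lra.
Qed.

Lemma torus_continuous_plus g1 g2 : torus_continuous d g1 -> torus_continuous d g2 ->
  torus_continuous d (fun y => g1 y + g2 y).
Proof. apply torus_continuous_op2, continuous2_plus. Qed.

Lemma torus_continuous_mult g1 g2 : torus_continuous d g1 -> torus_continuous d g2 ->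
  torus_continuous d (fun y => g1 y * g2 y).
Proof. apply torus_continuous_op2, continuous2_mult. Qed.

Lemma torus_continuous_const c : torus_continuous d (fun _ => c).
Proof. intros x eps He. exists 1. split. lra. intros. rewrite Rminus_diag, Rabs_R0. auto. Qed.

Lemma torus_continuous_coord j : (j < d)%nat -> torus_continuous d (fun y => y j).
Proof. intros Hj x eps He. exists eps. split; auto. Qed.

Lemma torus_continuous_comp (h : R -> R) g : (forall t, continuity_pt h t) ->
  torus_continuous d g -> torus_continuous d (fun y => h (g y)).
Proof.
  intros Hh Hg x eps He.
  destruct (proj1 (continuity_pt_iff h (g x)) (Hh _) eps He) as [del [Hd H]].
  destruct (Hg x del Hd) as [d1 [Hd1 H1]].
  exists d1. split; auto.
Qed.

Lemma torus_continuous_minus g1 g2 : torus_continuous d g1 -> torus_continuous d g2 ->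
  torus_continuous d (fun y => g1 y - g2 y).
Proof.
  intros H1 H2. apply torus_continuous_plus; auto.
  apply (torus_continuous_comp Ropp); auto.
  intros t. apply continuity_pt_opp, continuity_pt_id.
Qed.

Lemma torus_continuous_abs g : torus_continuous d g -> torus_continuous d (fun y => Rabs (g y)).
Proof. apply torus_continuous_comp. intros; apply Rcontinuity_abs. Qed.

Lemma torus_continuous_sum (F : nat -> (nat -> R) -> R) M :
  (forall i, torus_continuous d (F i)) ->
  torus_continuous d (fun y => sum_f_R0 (fun i => F i y) M).
Proof. intros HF. induction M; simpl. apply HF. apply torus_continuous_plus; auto. Qed.

Lemma torus_continuous_dot n m : (n <= d)%nat -> torus_continuous d (fun y => dot n y m).
Proof.
  induction n; intros Hn; simpl. apply torus_continuous_const.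
  apply torus_continuous_plus. apply IHn; lia.
  apply torus_continuous_mult. apply torus_continuous_coord; lia. apply torus_continuous_const.
Qed.

Lemma torus_continuous_cos_dot m : torus_continuous d (fun y => cos (2 * PI * dot d y m)).
Proof.
  apply (torus_continuous_comp (fun u => cos (2 * PI * u))).
  - intros t. apply continuity_pt_comp with (f1 := fun u => 2 * PI * u). reg. apply continuity_cos.
  - apply torus_continuous_dot; auto.
Qed.

Lemma continuity_pt_updR g x n t :
  torus_continuous d g -> continuity_pt (fun u => g (updR x n u)) t.
Proof.
  intros Hg. apply continuity_pt_iff. intros eps He.
  destruct (Hg (updR x n t) eps He) as [del [Hd H]].
  exists del; split; auto. intros u Hu. apply H. intros j Hj. unfold updR.
  destruct (Nat.eqb j n); auto. rewrite Rminus_diag, Rabs_R0; auto.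
Qed.

End TorusContinuity.

Fixpoint prodR (n : nat) (g : nat -> R) : R :=
  match n with O => 1 | S n' => prodR n' g * g n' end.

Lemma prodR_ext n g1 g2 : (forall j, (j < n)%nat -> g1 j = g2 j) -> prodR n g1 = prodR n g2.
Proof. induction n; intros H; simpl. auto. rewrite IHn, H; auto. Qed.

Lemma prodR_const n a : prodR n (fun _ => a) = a ^ n.
Proof. induction n; simpl. auto. rewrite IHn. ring. Qed.

Lemma prodR_nonneg n g : (forall j, (j < n)%nat -> 0 <= g j) -> 0 <= prodR n g.
Proof.
  induction n; intros H; simpl. lra.
  apply Rmult_le_pos. apply IHn; intros; apply H; lia. apply H; lia.
Qed.

Lemma prodR_unit_interval n g : (forall j, 0 <= g j <= 1) -> 0 <= prodR n g <= 1.
Proof.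
  intros H. induction n; simpl. lra.
  specialize (H n). split; [apply Rmult_le_pos|]; nra.
Qed.

Lemma prodR_split n g j : (j < n)%nat ->
  prodR n g = g j * prodR n (fun i => if Nat.eqb i j then 1 else g i).
Proof.
  induction n; intros Hj. lia. simpl. destruct (Nat.eq_dec j n).
  - subst. rewrite Nat.eqb_refl, (prodR_ext n (fun i => if Nat.eqb i n then 1 else g i) g);
      [ring|].
    intros i Hi. destruct (Nat.eqb_spec i n). lia. auto.
  - rewrite IHn by lia. destruct (Nat.eqb_spec n j). lia. ring.
Qed.

Lemma torus_continuous_prodR d n (G : nat -> (nat -> R) -> R) :
  (forall j, (j < n)%nat -> torus_continuous d (G j)) ->
  torus_continuous d (fun y => prodR n (fun j => G j y)).
Proof.
  induction n; intros HG; simpl. apply torus_continuous_const.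
  apply torus_continuous_mult. apply IHn. intros; apply HG; lia. apply HG; lia.
Qed.

(** * Iterated integrals over the cube *)

Definition cube (n : nat) (y : nat -> R) : Prop :=
  forall j, (j < n)%nat -> -(1/2) <= y j <= 1/2.

Section IteratedIntegrals.
Variable d : nat.

Lemma torus_continuous_uniform_slice G x n eps : torus_continuous d G -> 0 < eps ->
  exists del, 0 < del /\ forall s, -(1/2) <= s <= 1/2 -> forall y,
    (forall j, (j < d)%nat -> Rabs (y j - x j) < del) ->
    Rabs (G (updR y n s) - G (updR x n s)) <= eps.
Proof.
  intros HG He.
  apply (interval_local_to_global (-(1/2)) (1/2)
    (fun u v => exists del, 0 < del /\ forall s, u <= s <= v -> forall y,
       (forall j, (j < d)%nat -> Rabs (y j - x j) < del) ->
       Rabs (G (updR y n s) - G (updR x n s)) <= eps)); [lra | |].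
  - intros u v w [d1 [Hd1 H1]] [d2 [Hd2 H2]]. exists (Rmin d1 d2).
    split. apply Rmin_pos; auto.
    pose proof (Rmin_l d1 d2). pose proof (Rmin_r d1 d2).
    intros s Hs y Hy. destruct (Rle_dec s v);
      [apply H1 | apply H2]; try lra; intros j Hj; specialize (Hy j Hj); lra.
  - intros t Ht. assert (He2 : 0 < eps / 2) by lra.
    destruct (HG (updR x n t) (eps/2) He2) as [dt [Hdt Ht']].
    exists (dt / 2). split. lra. intros u v Hu Hv. exists (dt / 2). split. lra.
    intros s Hs y Hy.
    assert (Hclose : forall z, (forall j, (j < d)%nat -> Rabs (z j - x j) < dt / 2) ->
              Rabs (G (updR z n s) - G (updR x n t)) < eps / 2).
    { intros z Hz. apply Ht'. intros j Hj. unfold updR. destruct (Nat.eqb j n).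
      - apply Rabs_def1; lra.
      - specialize (Hz j Hj). lra. }
    assert (A1 := Hclose y Hy).
    assert (A2 : Rabs (G (updR x n s) - G (updR x n t)) < eps / 2)
      by (apply Hclose; intros; rewrite Rminus_diag, Rabs_R0; lra).
    replace (G (updR y n s) - G (updR x n s))
      with ((G (updR y n s) - G (updR x n t)) - (G (updR x n s) - G (updR x n t))) by ring.
    eapply Rle_trans. apply Rabs_triang. rewrite Rabs_Ropp. lra.
Qed.

Lemma torus_continuous_integ g n : torus_continuous d g -> torus_continuous d (integ n g).
Proof.
  intros Hg. induction n. exact Hg.
  intros x eps He. set (G := integ n g).
  assert (He2 : 0 < eps / 2) by lra.
  destruct (torus_continuous_uniform_slice G x n (eps/2) IHn He2) as [del [Hd H]].
  exists del. split; auto. intros y Hy. simpl. fold G.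
  assert (Cy : forall t, continuity_pt (fun u => G (updR y n u)) t)
    by (intros; apply (continuity_pt_updR d), IHn).
  assert (Cx : forall t, continuity_pt (fun u => G (updR x n u)) t)
    by (intros; apply (continuity_pt_updR d), IHn).
  fold (Ihalf (fun t => G (updR y n t))) (Ihalf (fun t => G (updR x n t))).
  replace (Ihalf (fun t => G (updR y n t)) - Ihalf (fun t => G (updR x n t)))
    with (Ihalf (fun t => 1 * G (updR y n t) + (-1) * G (updR x n t)))
    by (rewrite Ihalf_lin; auto; ring).
  rewrite Ihalf_RInt
    by (intros t; apply continuity_pt_plus; apply continuity_pt_mult; auto;
        apply continuity_pt_constant).
  eapply Rle_lt_trans; [apply abs_RInt_le_const with (M := eps / 2) | lra]; [lra| |].
  - apply ex_RInt_continuity. intros t.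
    apply continuity_pt_plus; apply continuity_pt_mult; auto; apply continuity_pt_constant.
  - intros t Ht. replace (1 * G (updR y n t) + -1 * G (updR x n t))
      with (G (updR y n t) - G (updR x n t)) by ring.
    apply H; auto.
Qed.

Lemma continuity_pt_integ_slice g n x t :
  torus_continuous d g -> continuity_pt (fun u => integ n g (updR x n u)) t.
Proof. intros Hg. apply (continuity_pt_updR d), torus_continuous_integ, Hg. Qed.

Lemma integ_lin g1 g2 n : torus_continuous d g1 -> torus_continuous d g2 -> forall x a b,
  integ n (fun y => a * g1 y + b * g2 y) x = a * integ n g1 x + b * integ n g2 x.
Proof.
  intros H1 H2. induction n; intros x a b. reflexivity.
  simpl. rewrite (functional_extensionality _ _ (fun t => IHn (updR x n t) a b)).
  apply Ihalf_lin; intros; apply continuity_pt_integ_slice; auto.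
Qed.

Lemma integ_scal g n c x : torus_continuous d g -> integ n (fun y => c * g y) x = c * integ n g x.
Proof.
  intros Hg. transitivity (integ n (fun y => c * g y + 0 * g y) x).
  - f_equal. apply functional_extensionality; intros; ring.
  - rewrite integ_lin; auto. ring.
Qed.

Lemma integ_le g1 g2 n : torus_continuous d g1 -> torus_continuous d g2 -> forall x,
  (forall y, cube n y -> (forall j, (n <= j)%nat -> y j = x j) -> g1 y <= g2 y) ->
  integ n g1 x <= integ n g2 x.
Proof.
  intros H1 H2. induction n; intros x H.
  { apply H. intros j Hj; lia. auto. }
  apply Ihalf_le; try (intros; apply continuity_pt_integ_slice; auto).
  intros t Ht. apply IHn. intros y Hy Hyx. apply H.
  - intros j Hj. destruct (Nat.eq_dec j n).
    + subst. rewrite Hyx by lia. unfold updR. rewrite Nat.eqb_refl. auto.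
    + apply Hy. lia.
  - intros j Hj. rewrite Hyx by lia. unfold updR. destruct (Nat.eqb_spec j n). lia. auto.
Qed.

Lemma integ_abs_le g n x : torus_continuous d g ->
  Rabs (integ n g x) <= integ n (fun y => Rabs (g y)) x.
Proof.
  intros Hg. assert (Ha := torus_continuous_abs d g Hg). apply Rabs_le. split.
  - replace (- integ n (fun y => Rabs (g y)) x)
      with (integ n (fun y => -1 * Rabs (g y)) x) by (rewrite integ_scal; auto; ring).
    apply integ_le; auto.
    + apply torus_continuous_mult; auto. apply torus_continuous_const.
    + intros y _ _. pose proof (Rle_abs (- g y)) as H. rewrite Rabs_Ropp in H. lra.
  - apply integ_le; auto. intros; apply Rle_abs.
Qed.

Lemma integ_sum n (F : nat -> (nat -> R) -> R) M x : (forall i, torus_continuous d (F i)) ->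
  integ n (fun y => sum_f_R0 (fun i => F i y) M) x = sum_f_R0 (fun i => integ n (F i) x) M.
Proof.
  intros HF. induction M. reflexivity.
  simpl. rewrite <- IHM.
  transitivity (integ n (fun y => 1 * sum_f_R0 (fun i => F i y) M + 1 * F (S M) y) x).
  - f_equal. apply functional_extensionality; intros; ring.
  - rewrite integ_lin. ring. apply torus_continuous_sum; auto. auto.
Qed.

End IteratedIntegrals.

Lemma integ_const n c x : integ n (fun _ => c) x = c.
Proof.
  revert x. induction n; intros x. reflexivity.
  simpl. rewrite (functional_extensionality _ (fun _ => c) (fun t => IHn (updR x n t))).
  apply Ihalf_const.
Qed.

Lemma integ_prod d n (psi : nat -> R -> R) c x : (n <= d)%nat ->
  (forall j t, continuity_pt (psi j) t) -> torus_continuous d c ->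
  (forall y y', (forall j, (n <= j)%nat -> y j = y' j) -> c y = c y') ->
  integ n (fun y => prodR n (fun j => psi j (y j)) * c y) x
  = prodR n (fun j => Ihalf (psi j)) * c x.
Proof.
  intros Hn Hpsi. revert c x. induction n; intros c x Hc Hdep. simpl. ring.
  simpl.
  assert (E : forall t, integ n (fun y => prodR n (fun j => psi j (y j)) * psi n (y n) * c y)
                (updR x n t) = prodR n (fun j => Ihalf (psi j)) * (psi n t * c x)).
  { intros t.
    transitivity (integ n (fun y => prodR n (fun j => psi j (y j)) * (psi n (y n) * c y))
                    (updR x n t)).
    { f_equal. apply functional_extensionality; intros; ring. }
    assert (Hc' : torus_continuous d (fun y => psi n (y n) * c y)).
    { apply torus_continuous_mult; auto.
      apply (torus_continuous_comp d (psi n)); auto. apply torus_continuous_coord; lia. }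
    rewrite IHn; try lia; auto.
    2:{ intros y y' Hyy. rewrite (Hyy n) by lia. f_equal. apply Hdep. intros; apply Hyy; lia. }
    f_equal. unfold updR. rewrite Nat.eqb_refl. f_equal. apply Hdep.
    intros j Hj. destruct (Nat.eqb_spec j n). lia. auto. }
  rewrite (functional_extensionality _ _ E).
  fold (Ihalf (fun t => prodR n (fun j => Ihalf (psi j)) * (psi n t * c x))).
  transitivity (Ihalf (fun t => (prodR n (fun j => Ihalf (psi j)) * c x) * psi n t + 0 * psi n t)).
  - f_equal. apply functional_extensionality; intros; ring.
  - rewrite Ihalf_lin; auto. ring.
Qed.

Lemma integ_prodR d (psi : nat -> R -> R) x : (forall j t, continuity_pt (psi j) t) ->
  integ d (fun y => prodR d (fun j => psi j (y j))) x = prodR d (fun j => Ihalf (psi j)).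
Proof.
  intros Hc.
  assert (E := integ_prod d d psi (fun _ => 1) x (le_n d) Hc (torus_continuous_const d 1)
                 (fun _ _ _ => eq_refl)).
  cbv beta in E. rewrite Rmult_1_r in E. rewrite <- E.
  f_equal. apply functional_extensionality; intros y. ring.
Qed.

(** * The one-dimensional Fejér kernel *)

Lemma sum_f_R0_lin (F G : nat -> R) a b N :
  sum_f_R0 (fun i => a * F i + b * G i) N = a * sum_f_R0 F N + b * sum_f_R0 G N.
Proof. induction N; simpl. ring. rewrite IHN. ring. Qed.

Lemma sum_f_R0_ge_term (g : nat -> R) D j :
  (forall i, 0 <= g i) -> (j <= D)%nat -> g j <= sum_f_R0 g D.
Proof.
  intros Hg Hj. induction D.
  - replace j with 0%nat by lia. simpl. lra.
  - simpl. pose proof (Hg (S D)). destruct (Nat.eq_dec j (S D)).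
    + subst. pose proof (cond_pos_sum g D Hg). lra.
    + assert (g j <= sum_f_R0 g D) by (apply IHD; lia). lra.
Qed.

Lemma sum_f_R0_zero_tail (h : nat -> R) N :
  (forall n, (1 <= n)%nat -> h n = 0) -> sum_f_R0 h N = h 0%nat.
Proof. intros H. induction N. reflexivity. simpl. rewrite IHN, (H (S N)) by lia. ring. Qed.

Definition centered (N i : nat) : Z := (Z.of_nat i - Z.of_nat N)%Z.

Lemma sum_centered (g : Z -> R) N :
  sum_f_R0 (fun i => g (centered N i)) (2*N)
  = sum_f_R0 (fun n => g (Z.of_nat n) + g (- Z.of_nat n)%Z) N - g 0%Z.
Proof.
  induction N.
  - simpl. unfold centered. simpl. ring.
  - replace (2 * S N)%nat with (S (S (2 * N))) by lia.
    rewrite tech5, (decomp_sum _ (S (2 * N))), Nat.pred_succ by lia.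
    rewrite (sum_eq (fun i => g (centered (S N) (S i))) (fun i => g (centered N i)))
      by (intros i _; f_equal; unfold centered; lia).
    rewrite IHN, (tech5 (fun n => g (Z.of_nat n) + g (- Z.of_nat n)%Z) N).
    replace (centered (S N) 0) with (- Z.of_nat (S N))%Z by (unfold centered; lia).
    replace (centered (S N) (S (S (2 * N)))) with (Z.of_nat (S N)) by (unfold centered; lia).
    ring.
Qed.

Definition cos_poly (c : Z -> R) (N : nat) (t : R) : R :=
  sum_f_R0 (fun i => c (centered N i) * cos (2 * PI * (t * IZR (centered N i)))) (2 * N).

Lemma continuity_pt_cos_poly c N t : continuity_pt (cos_poly c N) t.
Proof.
  apply continuity_pt_sum. intros i.
  apply continuity_pt_mult. apply continuity_pt_constant.
  apply continuity_pt_comp with (f1 := fun t => 2 * PI * (t * IZR (centered N i))).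
  reg. apply continuity_cos.
Qed.

Lemma cos_poly_sin_sum c N t : (forall v, c (- v)%Z = c v) ->
  sum_f_R0 (fun i => c (centered N i) * sin (2 * PI * (t * IZR (centered N i)))) (2 * N) = 0.
Proof.
  intros Hc. rewrite (sum_centered (fun v => c v * sin (2 * PI * (t * IZR v)))).
  rewrite (sum_eq _ (fun _ => 0)).
  - rewrite sum_cte. simpl IZR. rewrite Rmult_0_r, Rmult_0_r, sin_0. ring.
  - intros i _. rewrite Hc, opp_IZR.
    replace (2 * PI * (t * - IZR (Z.of_nat i))) with (- (2 * PI * (t * IZR (Z.of_nat i)))) by ring.
    rewrite sin_neg. ring.
Qed.

Definition fejer_coef (N : nat) (v : Z) : R := Rmax 0 (1 - IZR (Z.abs v) / INR (S N)).
Definition fejer (N : nat) : R -> R := cos_poly (fejer_coef N) N.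

Lemma fejer_coef_bounds N v : 0 <= fejer_coef N v <= 1.
Proof.
  unfold fejer_coef. split. apply Rmax_l. apply Rmax_lub. lra.
  assert (0 <= IZR (Z.abs v) / INR (S N)); [|lra].
  apply Rle_mult_inv_pos. apply IZR_le. lia. apply lt_0_INR. lia.
Qed.

Lemma fejer_coef_opp N v : fejer_coef N (- v) = fejer_coef N v.
Proof. unfold fejer_coef. rewrite Z.abs_opp. auto. Qed.

Lemma fejer_coef_0 N : fejer_coef N 0 = 1.
Proof.
  unfold fejer_coef. simpl IZR. unfold Rdiv. rewrite Rmult_0_l, Rminus_0_r.
  apply Rmax_right; lra.
Qed.

Lemma Ihalf_fejer N a : Ihalf (fun t => fejer N (t - a)) = 1.
Proof.
  unfold fejer, cos_poly.
  set (phase := fun i => - (2 * PI * (a * IZR (centered N i)))).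
  transitivity (Ihalf (fun t => sum_f_R0 (fun i => fejer_coef N (centered N i) *
      cos (2 * PI * (t * IZR (centered N i)) + phase i)) (2 * N))).
  { f_equal. apply functional_extensionality; intros t.
    apply sum_eq; intros i _. unfold phase. do 2 f_equal. ring. }
  rewrite Ihalf_sum
    by (intros; apply continuity_pt_mult;
        [apply continuity_pt_constant | apply continuity_pt_cos_linear]).
  rewrite (sum_eq _ (fun i => (fun v => fejer_coef N v *
      (if Z.eqb v 0 then cos (- (2 * PI * (a * IZR v))) else 0)) (centered N i))).
  2:{ intros i _. simpl. rewrite <- Ihalf_cos.
      transitivity (Ihalf (fun t => fejer_coef N (centered N i) *
          cos (2 * PI * (t * IZR (centered N i)) + phase i) + 0 * 0)).
      - f_equal; apply functional_extensionality; intros; ring.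
      - rewrite (Ihalf_lin _ (fun _ => 0)), Ihalf_const.
        + unfold phase. ring.
        + intros; apply continuity_pt_cos_linear.
        + intros; apply continuity_pt_constant. }
  rewrite (sum_centered (fun v => fejer_coef N v *
      (if Z.eqb v 0 then cos (- (2 * PI * (a * IZR v))) else 0))).
  rewrite sum_f_R0_zero_tail.
  - simpl. rewrite fejer_coef_0, Rmult_0_r, Rmult_0_r, Ropp_0, cos_0. ring.
  - intros n Hn. destruct (Z.eqb_spec (Z.of_nat n) 0); [lia|].
    destruct (Z.eqb_spec (- Z.of_nat n) 0); [lia|]. ring.
Qed.

Definition dirichlet_cos (N : nat) (t : R) := sum_f_R0 (fun a => cos (2 * PI * (t * INR a))) N.
Definition dirichlet_sin (N : nat) (t : R) := sum_f_R0 (fun a => sin (2 * PI * (t * INR a))) N.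

Lemma dirichlet_cos_S N t :
  dirichlet_cos (S N) t = 1 + cos (2*PI*t) * dirichlet_cos N t - sin (2*PI*t) * dirichlet_sin N t.
Proof.
  unfold dirichlet_cos, dirichlet_sin. rewrite decomp_sum, Nat.pred_succ by lia.
  simpl INR at 1. rewrite Rmult_0_r, Rmult_0_r, cos_0.
  rewrite (sum_eq _ (fun i => cos (2*PI*t) * cos (2 * PI * (t * INR i))
                            + (- sin (2*PI*t)) * sin (2 * PI * (t * INR i)))).
  - rewrite sum_f_R0_lin. ring.
  - intros i _. rewrite S_INR.
    replace (2 * PI * (t * (INR i + 1))) with (2 * PI * (t * INR i) + 2*PI*t) by ring.
    rewrite cos_plus. ring.
Qed.

Lemma dirichlet_sin_S N t :
  dirichlet_sin (S N) t = sin (2*PI*t) * dirichlet_cos N t + cos (2*PI*t) * dirichlet_sin N t.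
Proof.
  unfold dirichlet_cos, dirichlet_sin. rewrite decomp_sum, Nat.pred_succ by lia.
  simpl INR at 1. rewrite Rmult_0_r, Rmult_0_r, sin_0.
  rewrite (sum_eq _ (fun i => sin (2*PI*t) * cos (2 * PI * (t * INR i))
                            + cos (2*PI*t) * sin (2 * PI * (t * INR i)))).
  - rewrite sum_f_R0_lin. ring.
  - intros i _. rewrite S_INR.
    replace (2 * PI * (t * (INR i + 1))) with (2 * PI * (t * INR i) + 2*PI*t) by ring.
    rewrite sin_plus. ring.
Qed.

(* [|sum_(a <= N) e^(2 pi i a t)|^2 = sum_(|n| <= N) (N + 1 - |n|) e^(2 pi i n t)],
   with the right-hand side written over [n >= 0]. *)
Lemma dirichlet_square N t :
  dirichlet_cos N t ^ 2 + dirichlet_sin N t ^ 2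
  = 2 * sum_f_R0 (fun n => (INR (S N) - INR n) * cos (2 * PI * (t * INR n))) N - INR (S N).
Proof.
  induction N.
  - unfold dirichlet_cos, dirichlet_sin. simpl. rewrite !Rmult_0_r, cos_0, sin_0. ring.
  - rewrite tech5, (sum_eq (fun n => (INR (S (S N)) - INR n) * cos (2 * PI * (t * INR n)))
      (fun n => 1 * ((INR (S N) - INR n) * cos (2 * PI * (t * INR n))) + 1 * cos (2 * PI * (t * INR n))))
      by (intros; rewrite (S_INR (S N)); ring).
    rewrite sum_f_R0_lin. fold (dirichlet_cos N t).
    assert (Hsc := sin2_cos2 (2*PI*t)). unfold Rsqr in Hsc.
    assert (Hrot : dirichlet_sin (S N) t ^ 2 + (dirichlet_cos (S N) t - 1) ^ 2
                   = dirichlet_cos N t ^ 2 + dirichlet_sin N t ^ 2).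
    { rewrite dirichlet_sin_S, dirichlet_cos_S.
      transitivity ((sin (2*PI*t) * sin (2*PI*t) + cos (2*PI*t) * cos (2*PI*t)) *
                    (dirichlet_cos N t ^ 2 + dirichlet_sin N t ^ 2)); [ring | rewrite Hsc; ring]. }
    assert (Hlast : dirichlet_cos (S N) t = dirichlet_cos N t + cos (2 * PI * (t * INR (S N))))
      by reflexivity.
    rewrite IHN in Hrot. rewrite !S_INR in *. nra.
Qed.

Lemma fejer_one_sided N t : fejer N t =
  2 * sum_f_R0 (fun n => fejer_coef N (Z.of_nat n) * cos (2 * PI * (t * INR n))) N - 1.
Proof.
  unfold fejer, cos_poly.
  rewrite (sum_centered (fun v => fejer_coef N v * cos (2 * PI * (t * IZR v)))).
  simpl IZR at 3. rewrite Rmult_0_r, Rmult_0_r, cos_0, fejer_coef_0.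
  rewrite (sum_eq _ (fun n => 2 * (fejer_coef N (Z.of_nat n) * cos (2 * PI * (t * INR n))) + 0 * 0)).
  - rewrite sum_f_R0_lin. ring.
  - intros i _. rewrite fejer_coef_opp, opp_IZR, <- INR_IZR_INZ.
    replace (2 * PI * (t * - INR i)) with (- (2 * PI * (t * INR i))) by ring.
    rewrite cos_neg. ring.
Qed.

Lemma fejer_dirichlet N t :
  INR (S N) * fejer N t = dirichlet_cos N t ^ 2 + dirichlet_sin N t ^ 2.
Proof.
  rewrite dirichlet_square, fejer_one_sided.
  assert (HM : 0 < INR (S N)) by (apply lt_0_INR; lia).
  rewrite Rmult_minus_distr_l, <- Rmult_assoc, (Rmult_comm (INR (S N)) 2), Rmult_assoc, scal_sum.
  rewrite (sum_eq _ (fun n => (INR (S N) - INR n) * cos (2 * PI * (t * INR n)))); [ring|].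
  intros i Hi. unfold fejer_coef.
  rewrite (Z.abs_eq (Z.of_nat i) (Nat2Z.is_nonneg i)), <- INR_IZR_INZ.
  assert (INR i <= INR N) by (apply le_INR; auto). rewrite S_INR in *.
  rewrite Rmax_right; [field; lra|].
  assert (INR i / (INR N + 1) <= 1); [|lra].
  apply Rmult_le_reg_r with (INR N + 1). lra. field_simplify; lra.
Qed.

Lemma fejer_nonneg N t : 0 <= fejer N t.
Proof.
  assert (HM : 0 < INR (S N)) by (apply lt_0_INR; lia).
  pose proof (fejer_dirichlet N t). nra.
Qed.

Lemma dirichlet_cos_closed N t :
  2 * sin (PI * t) * dirichlet_cos N t = sin (2 * PI * (t * INR N) + PI * t) + sin (PI * t).
Proof.
  induction N.
  - unfold dirichlet_cos; simpl. rewrite !Rmult_0_r, cos_0, Rplus_0_l. ring.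
  - unfold dirichlet_cos; rewrite tech5; fold (dirichlet_cos N t).
    rewrite Rmult_plus_distr_l, IHN, S_INR.
    replace (2 * PI * (t * (INR N + 1)) + PI * t)
      with ((2 * PI * (t * INR N) + PI * t) + 2 * (PI * t)) by ring.
    replace (2 * PI * (t * (INR N + 1))) with ((2 * PI * (t * INR N) + PI * t) + PI * t) by ring.
    set (X := 2 * PI * (t * INR N) + PI * t). set (u := PI * t).
    rewrite sin_plus, cos_plus, sin_2a, cos_2a.
    assert (Hs := sin2_cos2 u). unfold Rsqr in Hs.
    replace (cos u * cos u) with (1 - sin u * sin u) by lra. ring.
Qed.

Lemma dirichlet_sin_closed N t :
  2 * sin (PI * t) * dirichlet_sin N t = cos (PI * t) - cos (2 * PI * (t * INR N) + PI * t).
Proof.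
  induction N.
  - unfold dirichlet_sin; simpl. rewrite !Rmult_0_r, sin_0, Rplus_0_l. ring.
  - unfold dirichlet_sin; rewrite tech5; fold (dirichlet_sin N t).
    rewrite Rmult_plus_distr_l, IHN, S_INR.
    replace (2 * PI * (t * (INR N + 1)) + PI * t)
      with ((2 * PI * (t * INR N) + PI * t) + 2 * (PI * t)) by ring.
    replace (2 * PI * (t * (INR N + 1))) with ((2 * PI * (t * INR N) + PI * t) + PI * t) by ring.
    set (X := 2 * PI * (t * INR N) + PI * t). set (u := PI * t).
    rewrite sin_plus, cos_plus, sin_2a, cos_2a.
    assert (Hs := sin2_cos2 u). unfold Rsqr in Hs.
    replace (cos u * cos u) with (1 - sin u * sin u) by lra. ring.
Qed.

Lemma fejer_decay N t : sin (PI * t) ^ 2 * fejer N t <= 1 / INR (S N).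
Proof.
  assert (HM : 0 < INR (S N)) by (apply lt_0_INR; lia).
  assert (Hc := dirichlet_cos_closed N t). assert (Hs := dirichlet_sin_closed N t).
  set (X := 2 * PI * (t * INR N) + PI * t) in *. set (u := PI * t) in *.
  assert (Hb : sin u ^ 2 * (dirichlet_cos N t ^ 2 + dirichlet_sin N t ^ 2) <= 1).
  { assert (E : 4 * (sin u ^ 2 * (dirichlet_cos N t ^ 2 + dirichlet_sin N t ^ 2))
                = (sin X + sin u) ^ 2 + (cos u - cos X) ^ 2)
      by (rewrite <- Hc, <- Hs; ring).
    assert (Hu := sin2_cos2 u). assert (HX := sin2_cos2 X). unfold Rsqr in *.
    assert (Hcos := COS_bound (X + u)). rewrite cos_plus in Hcos. nra. }
  rewrite <- fejer_dirichlet in Hb.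
  apply Rmult_le_reg_l with (INR (S N)); auto.
  replace (INR (S N) * (1 / INR (S N))) with 1 by (field; lra). nra.
Qed.

Definition nint (u : R) : Z :=
  let n0 := (up u - 1)%Z in if Rle_dec (u - IZR n0) (1/2) then n0 else (n0 + 1)%Z.

Lemma nint_close u : Rabs (u - IZR (nint u)) <= 1/2.
Proof.
  unfold nint. destruct (archimed u) as [H1 H2].
  rewrite minus_IZR. simpl. destruct (Rle_dec (u - (IZR (up u) - 1)) (1/2)).
  - rewrite minus_IZR. apply Rabs_le. simpl IZR. lra.
  - rewrite plus_IZR, minus_IZR. simpl IZR. apply Rabs_le. lra.
Qed.

Lemma sin_sq_shift u (n : Z) : sin (PI * u) ^ 2 = sin (PI * (u - IZR n)) ^ 2.
Proof.
  replace (PI * u) with (PI * (u - IZR n) + IZR n * PI) by ring.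
  assert (Hc := sin2_cos2 (IZR n * PI)).
  rewrite sin_plus, (sin_eq_0_1 (IZR n * PI)) in * by (exists n; auto).
  unfold Rsqr in Hc. nra.
Qed.

Lemma sin_sq_le (del v : R) : 0 < del -> del <= Rabs v -> Rabs v <= 1/2 ->
  sin (PI * del) ^ 2 <= sin (PI * v) ^ 2.
Proof.
  intros Hd H1 H2.
  replace (sin (PI * v) ^ 2) with (sin (PI * Rabs v) ^ 2).
  2:{ destruct (Rle_dec 0 v); [rewrite Rabs_right by lra; auto|].
      rewrite Rabs_left by lra. replace (PI * - v) with (- (PI * v)) by ring.
      rewrite sin_neg. ring. }
  pose proof PI_RGT_0.
  assert (0 <= sin (PI * del)) by (apply sin_ge_0; nra).
  assert (sin (PI * del) <= sin (PI * Rabs v)) by (apply sin_incr_1; nra).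
  nra.
Qed.

Lemma fejer_far N t del : 0 < del -> del <= Rabs (t - IZR (nint t)) ->
  fejer N t <= 1 / (INR (S N) * sin (PI * del) ^ 2).
Proof.
  intros Hd Hf.
  assert (Hs := sin_sq_le del (t - IZR (nint t)) Hd Hf (nint_close t)).
  rewrite <- sin_sq_shift in Hs.
  assert (Hp : 0 < sin (PI * del) ^ 2).
  { pose proof PI_RGT_0. assert (del <= 1/2) by (pose proof (nint_close t); lra).
    assert (0 < sin (PI * del)) by (apply sin_gt_0; nra). nra. }
  assert (HM : 0 < INR (S N)) by (apply lt_0_INR; lia).
  pose proof (fejer_decay N t). pose proof (fejer_nonneg N t).
  assert (Hdecay : INR (S N) * (sin (PI * t) ^ 2 * fejer N t) <= 1).
  { replace 1 with (INR (S N) * (1 / INR (S N))) by (field; lra).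
    apply Rmult_le_compat_l; lra. }
  apply Rmult_le_reg_l with (INR (S N) * sin (PI * del) ^ 2). nra.
  replace (INR (S N) * sin (PI * del) ^ 2 * (1 / (INR (S N) * sin (PI * del) ^ 2)))
    with 1 by (field; nra).
  nra.
Qed.

(** * Functions on the torus *)

Section TorusFunctions.
Variables (d : nat) (f : (nat -> R) -> R).
Hypothesis Hf : torus_fun d f.

Lemma torus_fun_shift_nat x j k : (j < d)%nat -> f (updR x j (x j + INR k)) = f x.
Proof.
  destruct Hf as [_ Hper]. intros Hj. induction k.
  - f_equal. apply functional_extensionality; intros i. unfold updR.
    destruct (Nat.eqb_spec i j); subst; simpl; auto; ring.
  - rewrite <- IHk, <- (Hper (updR x j (x j + INR k)) j Hj). f_equal.
    apply functional_extensionality; intros i. unfold updR.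
    destruct (Nat.eqb_spec i j); [rewrite Nat.eqb_refl, S_INR; ring | auto].
Qed.

Lemma torus_fun_shift_Z x j z : (j < d)%nat -> f (updR x j (x j + IZR z)) = f x.
Proof.
  intros Hj. destruct (Z_le_gt_dec 0 z).
  - replace z with (Z.of_nat (Z.to_nat z)) by lia. rewrite <- INR_IZR_INZ.
    apply torus_fun_shift_nat; auto.
  - set (x' := updR x j (x j + IZR z)).
    replace (f x) with (f (updR x' j (x' j + INR (Z.to_nat (- z))))).
    + symmetry. apply torus_fun_shift_nat; auto.
    + f_equal. apply functional_extensionality; intros i. unfold x', updR.
      destruct (Nat.eqb_spec i j); [subst; rewrite Nat.eqb_refl | auto].
      rewrite INR_IZR_INZ, Z2Nat.id, opp_IZR by lia. ring.
Qed.

Lemma torus_fun_shift y (n : nat -> Z) : f (fun j => y j + IZR (n j)) = f y.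
Proof.
  assert (H : forall D, (D <= d)%nat ->
            f (fun j => if Nat.ltb j D then y j + IZR (n j) else y j) = f y).
  { induction D; intros HD; [reflexivity|].
    set (yD := fun j => if Nat.ltb j D then y j + IZR (n j) else y j).
    transitivity (f yD); [|apply IHD; lia].
    rewrite <- (torus_fun_shift_Z yD D (n D)) by lia. f_equal.
    apply functional_extensionality; intros j. unfold updR, yD.
    destruct (Nat.eqb_spec j D).
    - subst. destruct (Nat.ltb_spec D D), (Nat.ltb_spec D (S D)); auto; lia.
    - destruct (Nat.ltb_spec j (S D)), (Nat.ltb_spec j D); auto; lia. }
  rewrite <- (H d (le_n d)). apply (proj1 Hf). intros j Hj.
  destruct (Nat.ltb_spec j d); auto; lia.
Qed.

Lemma torus_fun_cube y : exists y', cube d y' /\ f y' = f y.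
Proof.
  exists (fun j => y j + IZR (- nint (y j))). split.
  - intros j Hj. rewrite opp_IZR. pose proof (nint_close (y j)).
    apply Rabs_le_between in H. lra.
  - apply (torus_fun_shift y (fun j => (- nint (y j))%Z)).
Qed.

Lemma torus_fun_close_mod1 z del eta y :
  (forall w, (forall j, (j < d)%nat -> Rabs (w j - z j) < del) -> Rabs (f w - f z) < eta) ->
  (forall j, (j < d)%nat -> Rabs ((y j - z j) - IZR (nint (y j - z j))) < del) ->
  Rabs (f y - f z) < eta.
Proof.
  intros Hnear Hclose.
  rewrite <- (torus_fun_shift y (fun j => (- nint (y j - z j))%Z)).
  apply Hnear. intros j Hj. rewrite opp_IZR.
  replace (y j + - IZR (nint (y j - z j)) - z j) with (y j - z j - IZR (nint (y j - z j))) by ring.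
  auto.
Qed.

End TorusFunctions.

(* Induction on the number [n] of leading coordinates ranging over [-1/2, 1/2]
   while the others stay close to a base point. *)
Lemma torus_continuous_bounded_near d f n x : torus_continuous d f ->
  exists del, 0 < del /\ exists B, forall y, cube n y ->
    (forall j, (n <= j)%nat -> (j < d)%nat -> Rabs (y j - x j) < del) -> Rabs (f y) <= B.
Proof.
  intros Hc. revert x. induction n; intros x.
  - destruct (Hc x 1 ltac:(lra)) as [del [Hd H]]. exists del. split; auto.
    exists (Rabs (f x) + 1). intros y _ Hy.
    assert (Rabs (f y - f x) < 1) by (apply H; intros; apply Hy; lia).
    pose proof (Rabs_triang_inv (f y) (f x)). lra.
  - assert (HS : exists del, 0 < del /\ exists B, forall y, cube n y ->
               -(1/2) <= y n <= 1/2 ->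
               (forall j, (S n <= j)%nat -> (j < d)%nat -> Rabs (y j - x j) < del) ->
               Rabs (f y) <= B).
    { apply (interval_local_to_global (-(1/2)) (1/2) (fun u v =>
        exists del, 0 < del /\ exists B, forall y, cube n y -> u <= y n <= v ->
          (forall j, (S n <= j)%nat -> (j < d)%nat -> Rabs (y j - x j) < del) ->
          Rabs (f y) <= B)); [lra | |].
      - intros u v w [d1 [Hd1 [B1 H1]]] [d2 [Hd2 [B2 H2]]].
        exists (Rmin d1 d2). split. apply Rmin_pos; auto.
        pose proof (Rmin_l d1 d2). pose proof (Rmin_r d1 d2).
        pose proof (Rmax_l B1 B2). pose proof (Rmax_r B1 B2).
        exists (Rmax B1 B2). intros y Hy Hyn Hj. destruct (Rle_dec (y n) v).
        + eapply Rle_trans; [apply H1|]; auto; try lra.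
          intros j Hj1 Hj2. specialize (Hj j Hj1 Hj2). lra.
        + eapply Rle_trans; [apply H2|]; auto; try lra.
          intros j Hj1 Hj2. specialize (Hj j Hj1 Hj2). lra.
      - intros t Ht. destruct (IHn (updR x n t)) as [dt [Hdt [Bt Ht']]].
        exists dt. split; auto. intros u v Hu Hv. exists dt. split; auto. exists Bt.
        intros y Hy Hyn Hj. apply Ht'; auto. intros j Hj1 Hj2. unfold updR.
        destruct (Nat.eqb_spec j n); [subst; apply Rabs_def1; lra|].
        apply Hj; auto; lia. }
    destruct HS as [del [Hd [B HB]]]. exists del. split; auto. exists B.
    intros y Hy Hj. apply HB; try (apply Hy; lia).
    + intros j Hj'; apply Hy; lia.
    + intros j Hj1 Hj2; apply Hj; lia.
Qed.

Lemma torus_continuous_bounded d f : torus_continuous d f ->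
  exists B, forall y, cube d y -> Rabs (f y) <= B.
Proof.
  intros Hc.
  destruct (torus_continuous_bounded_near d f d (fun _ => 0) Hc) as [del [Hd [B HB]]].
  exists B. intros y Hy. apply HB; auto. intros; lia.
Qed.

(** * Fejér means on the torus *)

Definition fejer_prod (d N : nat) (z y : nat -> R) : R :=
  prodR d (fun j => fejer N (y j - z j)).
Definition fejer_prod_omit (d N j : nat) (z y : nat -> R) : R :=
  prodR d (fun i => if Nat.eqb i j then 1 else fejer N (y i - z i)).

Section FejerProduct.
Variables (d N : nat) (z : nat -> R).

Lemma torus_continuous_fejer_coord j : (j < d)%nat ->
  torus_continuous d (fun y => fejer N (y j - z j)).
Proof.
  intros Hj. apply (torus_continuous_comp d (fejer N)).
  - intros; apply continuity_pt_cos_poly.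
  - apply torus_continuous_minus. apply torus_continuous_coord; auto. apply torus_continuous_const.
Qed.

Lemma torus_continuous_fejer_prod : torus_continuous d (fejer_prod d N z).
Proof.
  apply (torus_continuous_prodR d d (fun j y => fejer N (y j - z j))).
  apply torus_continuous_fejer_coord.
Qed.

Lemma torus_continuous_fejer_prod_omit j : torus_continuous d (fejer_prod_omit d N j z).
Proof.
  apply (torus_continuous_prodR d d (fun i y => if Nat.eqb i j then 1 else fejer N (y i - z i))).
  intros i Hi. destruct (Nat.eqb i j). apply torus_continuous_const.
  apply torus_continuous_fejer_coord; auto.
Qed.

Lemma fejer_prod_nonneg y : 0 <= fejer_prod d N z y.
Proof. apply prodR_nonneg. intros; apply fejer_nonneg. Qed.

Lemma fejer_prod_omit_nonneg j y : 0 <= fejer_prod_omit d N j z y.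
Proof. apply prodR_nonneg. intros i _. destruct (Nat.eqb i j). lra. apply fejer_nonneg. Qed.

Lemma integ_fejer_prod x : integ d (fejer_prod d N z) x = 1.
Proof.
  unfold fejer_prod. rewrite (integ_prodR d (fun j t => fejer N (t - z j))).
  - rewrite (prodR_ext d _ (fun _ => 1)), prodR_const, pow1; auto.
    intros; apply Ihalf_fejer.
  - intros j t. apply continuity_pt_comp with (f1 := fun t => t - z j).
    reg. apply continuity_pt_cos_poly.
Qed.

Lemma integ_fejer_prod_omit j x : integ d (fejer_prod_omit d N j z) x = 1.
Proof.
  unfold fejer_prod_omit.
  rewrite (integ_prodR d (fun i t => if Nat.eqb i j then 1 else fejer N (t - z i))).
  - rewrite (prodR_ext d _ (fun _ => 1)), prodR_const, pow1; auto.
    intros i _. destruct (Nat.eqb i j). apply Ihalf_const. apply Ihalf_fejer.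
  - intros i t. destruct (Nat.eqb i j). apply continuity_pt_constant.
    apply continuity_pt_comp with (f1 := fun t => t - z i). reg. apply continuity_pt_cos_poly.
Qed.

Lemma fejer_prod_far j y del : (j < d)%nat -> 0 < del ->
  del <= Rabs ((y j - z j) - IZR (nint (y j - z j))) ->
  fejer_prod d N z y <=
  sum_f_R0 (fun i => fejer_prod_omit d N i z y) (pred d) / (INR (S N) * sin (PI * del) ^ 2).
Proof.
  intros Hj Hdel Hfar.
  unfold fejer_prod. rewrite (prodR_split d _ j Hj). fold (fejer_prod_omit d N j z y).
  unfold Rdiv. rewrite (Rmult_comm (sum_f_R0 _ _)). apply Rmult_le_compat.
  - apply fejer_nonneg.
  - apply fejer_prod_omit_nonneg.
  - rewrite <- (Rmult_1_l (/ _)). apply fejer_far; auto.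
  - apply (sum_f_R0_ge_term (fun i => fejer_prod_omit d N i z y)); [|lia].
    intros; apply fejer_prod_omit_nonneg.
Qed.

End FejerProduct.

Lemma eventually_div_le C e : 0 < e ->
  exists N0, forall N, (N0 <= N)%nat -> C / INR (S N) <= e.
Proof.
  intros He. destruct (INR_archimed e C He) as [n Hn].
  exists n. intros N HN.
  assert (INR n <= INR (S N)) by (apply le_INR; lia).
  assert (HM : 0 < INR (S N)) by (apply lt_0_INR; lia).
  apply Rmult_le_reg_r with (INR (S N)); auto.
  unfold Rdiv. rewrite Rmult_assoc, Rinv_l by lra. nra.
Qed.

Section FejerMeans.
Variables (d : nat) (f : (nat -> R) -> R).
Hypotheses (Hd : (1 <= d)%nat) (Hf : torus_fun d f) (Hc : torus_continuous d f).

(* Near [z] (modulo 1 in every coordinate) continuity at [z] controls [f y - f z];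
   away from [z] some factor of the Fejér product is small. *)
Lemma fejer_mean_integrand_bound N z y B eta del :
  (forall y, cube d y -> Rabs (f y) <= B) -> 0 < del <= 1/2 ->
  (forall w, (forall j, (j < d)%nat -> Rabs (w j - z j) < del) -> Rabs (f w - f z) < eta) ->
  cube d y -> cube d z ->
  Rabs ((f y - f z) * fejer_prod d N z y)
  <= eta * fejer_prod d N z y + 2 * B / (INR (S N) * sin (PI * del) ^ 2) *
     sum_f_R0 (fun j => fejer_prod_omit d N j z y) (pred d).
Proof.
  intros HB Hdel Hnear Hy Hz.
  set (Ssum := sum_f_R0 (fun j => fejer_prod_omit d N j z y) (pred d)).
  set (D := INR (S N) * sin (PI * del) ^ 2).
  assert (HK := fejer_prod_nonneg d N z y).
  assert (HS : 0 <= Ssum) by (apply cond_pos_sum; intros; apply fejer_prod_omit_nonneg).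
  assert (HD : 0 < D).
  { assert (0 < INR (S N)) by (apply lt_0_INR; lia). pose proof PI_RGT_0.
    assert (0 < sin (PI * del)) by (apply sin_gt_0; nra).
    apply Rmult_lt_0_compat; auto. apply pow_lt; auto. }
  assert (HBy := HB y Hy). assert (HBz := HB z Hz).
  assert (Heta : 0 <= eta).
  { left. specialize (Hnear z). rewrite Rminus_diag, Rabs_R0 in Hnear.
    apply Hnear. intros; rewrite Rminus_diag, Rabs_R0; lra. }
  assert (Hcoef : 0 <= 2 * B / D) by (apply Rle_mult_inv_pos; [pose proof (Rabs_pos (f y))|]; lra).
  rewrite Rabs_mult, (Rabs_right (fejer_prod d N z y)) by lra.
  destruct (classic (exists j, (j < d)%nat /\
      del <= Rabs ((y j - z j) - IZR (nint (y j - z j))))) as [[j [Hj Hfar]]|Hclose].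
  - assert (Hfy : Rabs (f y - f z) <= 2 * B).
    { pose proof (Rabs_triang (f y) (- f z)). rewrite Rabs_Ropp in *. unfold Rminus. lra. }
    assert (Hfar' := fejer_prod_far d N z j y del Hj (proj1 Hdel) Hfar). fold Ssum D in Hfar'.
    assert (Rabs (f y - f z) * fejer_prod d N z y <= 2 * B * (Ssum / D))
      by (apply Rmult_le_compat; auto; apply Rabs_pos).
    assert (0 <= eta * fejer_prod d N z y) by (apply Rmult_le_pos; auto).
    replace (2 * B / D * Ssum) with (2 * B * (Ssum / D)) by (field; lra). lra.
  - assert (Rabs (f y - f z) < eta).
    { apply (torus_fun_close_mod1 d f Hf z del eta); auto. intros j Hj.
      apply Rnot_le_lt. intros Hle. apply Hclose. exists j. auto. }
    assert (0 <= 2 * B / D * Ssum) by (apply Rmult_le_pos; auto). nra.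
Qed.

Lemma fejer_mean_error_le N z B eta del :
  (forall y, cube d y -> Rabs (f y) <= B) -> 0 < del <= 1/2 ->
  (forall w, (forall j, (j < d)%nat -> Rabs (w j - z j) < del) -> Rabs (f w - f z) < eta) ->
  cube d z ->
  Rabs (torus_int d (fun y => f y * fejer_prod d N z y) - f z)
  <= eta + 2 * B / (INR (S N) * sin (PI * del) ^ 2) * INR d.
Proof.
  intros HB Hdel Hnear Hz.
  set (coef := 2 * B / (INR (S N) * sin (PI * del) ^ 2)).
  assert (HK := torus_continuous_fejer_prod d N z).
  set (Ssum := fun y => sum_f_R0 (fun j => fejer_prod_omit d N j z y) (pred d)).
  assert (HSsum : torus_continuous d Ssum)
    by (apply (torus_continuous_sum d (fun j y => fejer_prod_omit d N j z y));
        intros; apply torus_continuous_fejer_prod_omit).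
  assert (Hfz : torus_continuous d (fun y => (f y - f z) * fejer_prod d N z y))
    by (apply torus_continuous_mult, HK; apply torus_continuous_minus; auto;
        apply torus_continuous_const).
  unfold torus_int.
  replace (integ d (fun y => f y * fejer_prod d N z y) (fun _ => 0) - f z)
    with (integ d (fun y => (f y - f z) * fejer_prod d N z y) (fun _ => 0)).
  2:{ transitivity (integ d (fun y => 1 * (f y * fejer_prod d N z y)
                                     + (- f z) * fejer_prod d N z y) (fun _ => 0)).
      - f_equal. apply functional_extensionality. intros; ring.
      - rewrite (integ_lin d), integ_fejer_prod; auto. ring. apply torus_continuous_mult; auto. }
  eapply Rle_trans. apply (integ_abs_le d), Hfz.
  eapply Rle_trans. apply (integ_le d) with
    (g2 := fun y => eta * fejer_prod d N z y + coef * Ssum y).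
  - apply torus_continuous_abs, Hfz.
  - apply torus_continuous_plus; apply torus_continuous_mult; auto; apply torus_continuous_const.
  - intros y Hy _. apply (fejer_mean_integrand_bound N z y B eta del); auto.
  - rewrite (integ_lin d), integ_fejer_prod; auto. unfold Ssum.
    rewrite (integ_sum d), (sum_eq _ (fun _ => 1)), sum_cte
      by (intros; try apply integ_fejer_prod_omit; apply torus_continuous_fejer_prod_omit).
    replace (S (pred d)) with d by lia. lra.
Qed.

Lemma fejer_mean_converges z : cube d z -> forall eps, 0 < eps ->
  exists N0, forall N, (N0 <= N)%nat ->
  Rabs (torus_int d (fun y => f y * fejer_prod d N z y) - f z) <= eps.
Proof.
  intros Hz eps He.
  destruct (torus_continuous_bounded d f Hc) as [B HB].
  destruct (Hc z (eps/2) ltac:(lra)) as [d1 [Hd1 Hnear]].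
  set (del := Rmin d1 (1/2)).
  assert (Hdel : 0 < del <= 1/2) by (split; [apply Rmin_pos | apply Rmin_r]; lra).
  assert (Hs : 0 < sin (PI * del) ^ 2).
  { pose proof PI_RGT_0. assert (0 < sin (PI * del)) by (apply sin_gt_0; nra). nra. }
  destruct (eventually_div_le (2 * B * INR d / sin (PI * del) ^ 2) (eps/2) ltac:(lra))
    as [N0 HN0].
  exists N0. intros N HN. specialize (HN0 N HN).
  assert (HM : 0 < INR (S N)) by (apply lt_0_INR; lia).
  eapply Rle_trans. apply (fejer_mean_error_le N z B (eps/2) del); auto.
  - intros w Hw. apply Hnear. intros j Hj. specialize (Hw j Hj).
    pose proof (Rmin_l d1 (1/2)). unfold del in Hw. lra.
  - replace (2 * B / (INR (S N) * sin (PI * del) ^ 2) * INR d)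
      with (2 * B * INR d / sin (PI * del) ^ 2 / INR (S N)) by (field; repeat split; nra).
    lra.
Qed.

End FejerMeans.

(** * Fourier expansion of the Fejér means *)

Lemma boxsum_lin n N F G a b m0 :
  boxsum n N (fun m => a * F m + b * G m) m0 = a * boxsum n N F m0 + b * boxsum n N G m0.
Proof.
  revert m0. induction n; intros m0. reflexivity.
  simpl. rewrite <- sum_f_R0_lin. apply sum_eq. intros; apply IHn.
Qed.

Lemma boxsum_le n N F G m0 : (forall m, F m <= G m) -> boxsum n N F m0 <= boxsum n N G m0.
Proof. intros H. revert m0. induction n; intros m0. apply H. apply sum_Rle. intros; apply IHn. Qed.

Lemma boxsum_zero n N m0 : boxsum n N (fun _ => 0) m0 = 0.
Proof.
  revert m0; induction n; intros m0; simpl. auto.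
  rewrite (sum_eq _ (fun _ => 0)), sum_cte by (intros; apply IHn). ring.
Qed.

Lemma boxsum_factor n N A F m0 :
  (forall m, (forall j, (n <= j)%nat -> m j = m0 j) -> A m = A m0) ->
  boxsum n N (fun m => A m * F m) m0 = A m0 * boxsum n N F m0.
Proof.
  revert m0. induction n; intros m0 HA. reflexivity.
  assert (Hupd : forall i, A (updZ m0 n i) = A m0).
  { intros i. apply HA. intros j Hj. unfold updZ. destruct (Nat.eqb_spec j n). lia. auto. }
  simpl. rewrite scal_sum. apply sum_eq. intros i _.
  rewrite IHn, Hupd; [ring|].
  intros m Hm. rewrite Hupd. apply HA.
  intros j Hj. rewrite Hm by lia. unfold updZ. destruct (Nat.eqb_spec j n). lia. auto.
Qed.

Lemma torus_continuous_boxsum d n N (G : (nat -> R) -> (nat -> Z) -> R) :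
  (forall m, torus_continuous d (fun y => G y m)) ->
  forall m0, torus_continuous d (fun y => boxsum n N (G y) m0).
Proof.
  intros HG. induction n; intros m0; simpl. apply HG.
  apply (torus_continuous_sum d (fun i y => boxsum n N (G y) (updZ m0 n (centered N i)))).
  intros; apply IHn.
Qed.

Lemma integ_boxsum d n' n N (G : (nat -> R) -> (nat -> Z) -> R) x :
  (forall m, torus_continuous d (fun y => G y m)) -> forall m0,
  integ n' (fun y => boxsum n N (G y) m0) x = boxsum n N (fun m => integ n' (fun y => G y m) x) m0.
Proof.
  intros HG. induction n; intros m0. reflexivity.
  simpl. rewrite (integ_sum d n' (fun i y => boxsum n N (G y) (updZ m0 n (centered N i)))).
  - apply sum_eq. intros; apply IHn.
  - intros; apply torus_continuous_boxsum; auto.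
Qed.

Lemma dot_sub_l n y z m : dot n (fun j => y j - z j) m = dot n y m - dot n z m.
Proof. induction n; simpl. ring. rewrite IHn. ring. Qed.

Lemma dot_opp_l n x m : dot n (fun j => - x j) m = - dot n x m.
Proof. induction n; simpl. ring. rewrite IHn. ring. Qed.

Lemma dot_0_l n m : dot n (fun _ => 0) m = 0.
Proof. induction n; simpl. ring. rewrite IHn. ring. Qed.

Lemma dot_0_r n x : dot n x (fun _ => 0%Z) = 0.
Proof. induction n; simpl. ring. rewrite IHn. ring. Qed.

Definition coef_prod (c : Z -> R) (n : nat) (m : nat -> Z) : R := prodR n (fun j => c (m j)).

Lemma boxsum_S_coord n N (g : Z -> R) F m0 :
  boxsum (S n) N (fun m => g (m n) * F m) m0 =
  sum_f_R0 (fun i => g (centered N i) * boxsum n N F (updZ m0 n (centered N i))) (2 * N).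
Proof.
  apply sum_eq. intros i _. fold (centered N i).
  rewrite (boxsum_factor n N (fun m => g (m n))).
  - unfold updZ. rewrite Nat.eqb_refl. reflexivity.
  - intros m Hm. rewrite Hm by lia. reflexivity.
Qed.

Lemma boxsum_cos_prod c N w : (forall v, c (- v)%Z = c v) -> forall n m0,
  boxsum n N (fun m => coef_prod c n m * cos (2 * PI * dot n w m)) m0
    = prodR n (fun j => cos_poly c N (w j)) /\
  boxsum n N (fun m => coef_prod c n m * sin (2 * PI * dot n w m)) m0 = 0.
Proof.
  intros Hc. induction n; intros m0.
  { simpl. unfold coef_prod; simpl. rewrite Rmult_0_r, cos_0, sin_0. split; ring. }
  set (gc := fun v => c v * cos (2 * PI * (w n * IZR v))).
  set (gs := fun v => c v * sin (2 * PI * (w n * IZR v))).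
  set (P := fun m => coef_prod c n m * cos (2 * PI * dot n w m)).
  set (Q := fun m => coef_prod c n m * sin (2 * PI * dot n w m)).
  assert (Ecos : (fun m => coef_prod c (S n) m * cos (2 * PI * dot (S n) w m))
                 = (fun m => 1 * (gc (m n) * P m) + (-1) * (gs (m n) * Q m))).
  { apply functional_extensionality; intros m. unfold P, Q, gc, gs, coef_prod. simpl.
    rewrite Rmult_plus_distr_l, cos_plus. ring. }
  assert (Esin : (fun m => coef_prod c (S n) m * sin (2 * PI * dot (S n) w m))
                 = (fun m => 1 * (gs (m n) * P m) + 1 * (gc (m n) * Q m))).
  { apply functional_extensionality; intros m. unfold P, Q, gc, gs, coef_prod. simpl.
    rewrite Rmult_plus_distr_l, sin_plus. ring. }
  assert (Hgs : sum_f_R0 (fun i => gs (centered N i)) (2 * N) = 0)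
    by (apply cos_poly_sin_sum; auto).
  rewrite Ecos, Esin, !boxsum_lin, !boxsum_S_coord.
  rewrite !(sum_eq (fun i => _ * boxsum n N P _) (fun i => _ * prodR n (fun j => cos_poly c N (w j))))
    by (intros; rewrite (proj1 (IHn _)); reflexivity).
  rewrite !(sum_eq (fun i => _ * boxsum n N Q _) (fun i => _ * 0))
    by (intros; rewrite (proj2 (IHn _)); reflexivity).
  rewrite <- !scal_sum, Hgs. split; [|ring].
  change (sum_f_R0 (fun i => gc (centered N i)) (2 * N)) with (cos_poly c N (w n)).
  cbn [prodR]. ring.
Qed.

Lemma fejer_prod_boxsum d N z y : fejer_prod d N z y =
  boxsum d N (fun m => coef_prod (fejer_coef N) d m * cos (2 * PI * dot d (fun j => y j - z j) m))
    (fun _ => 0%Z).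
Proof.
  destruct (boxsum_cos_prod (fejer_coef N) N (fun j => y j - z j) (fejer_coef_opp N) d
              (fun _ => 0%Z)) as [E _].
  rewrite E. reflexivity.
Qed.

Lemma fejer_prod_sym_boxsum d N x y :
  (fejer_prod d N x y + fejer_prod d N (fun j => - x j) y) / 2 =
  boxsum d N (fun m => coef_prod (fejer_coef N) d m *
    cos (2 * PI * dot d x m) * cos (2 * PI * dot d y m)) (fun _ => 0%Z).
Proof.
  rewrite !fejer_prod_boxsum.
  replace ((_ + _) / 2) with (1/2 * boxsum d N (fun m => coef_prod (fejer_coef N) d m *
      cos (2 * PI * dot d (fun j => y j - x j) m)) (fun _ => 0%Z) +
    1/2 * boxsum d N (fun m => coef_prod (fejer_coef N) d m *
      cos (2 * PI * dot d (fun j => y j - - x j) m)) (fun _ => 0%Z)) by field.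
  rewrite <- boxsum_lin. f_equal. apply functional_extensionality; intros m.
  rewrite !dot_sub_l, dot_opp_l.
  replace (2 * PI * (dot d y m - dot d x m)) with (2 * PI * dot d y m - 2 * PI * dot d x m) by ring.
  replace (2 * PI * (dot d y m - - dot d x m)) with (2 * PI * dot d y m + 2 * PI * dot d x m) by ring.
  rewrite cos_minus, cos_plus. field.
Qed.

(* Averaging the kernels centred at [x] and [-x] keeps only the cosine part of
   the Fourier series, which is all that [fhat_re] describes. *)
Definition fejer_mean_sym (d N : nat) (f : (nat -> R) -> R) (x : nat -> R) : R :=
  torus_int d (fun y => f y * ((fejer_prod d N x y + fejer_prod d N (fun j => - x j) y) / 2)).

Lemma fejer_mean_sym_fourier d N f x : torus_continuous d f ->
  fejer_mean_sym d N f x = boxsum d N (fun m =>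
    coef_prod (fejer_coef N) d m * cos (2 * PI * dot d x m) * fhat_re d f m) (fun _ => 0%Z).
Proof.
  intros Hf. unfold fejer_mean_sym, fhat_re, torus_int.
  set (c := fun m => coef_prod (fejer_coef N) d m * cos (2 * PI * dot d x m)).
  assert (Hcos : forall m, torus_continuous d (fun y => f y * cos (2 * PI * dot d y m)))
    by (intros; apply torus_continuous_mult; auto; apply torus_continuous_cos_dot).
  transitivity (integ d (fun y => boxsum d N (fun m => c m * (f y * cos (2 * PI * dot d y m)))
                  (fun _ => 0%Z)) (fun _ => 0)).
  - f_equal. apply functional_extensionality; intros y.
    rewrite fejer_prod_sym_boxsum, <- (boxsum_factor d N (fun _ => f y)) by auto.
    f_equal. apply functional_extensionality; intros m. unfold c. ring.
  - rewrite (integ_boxsum d).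
    + f_equal. apply functional_extensionality; intros m. apply (integ_scal d), Hcos.
    + intros m. apply torus_continuous_mult; auto. apply torus_continuous_const.
Qed.

Lemma fhat_re_bound d f m : torus_continuous d f ->
  Rabs (fhat_re d f m) <= torus_int d (fun y => Rabs (f y)).
Proof.
  intros Hf. unfold fhat_re, torus_int.
  assert (Hcos := torus_continuous_cos_dot d m).
  eapply Rle_trans. apply (integ_abs_le d). apply torus_continuous_mult; auto.
  apply (integ_le d).
  - apply torus_continuous_abs, torus_continuous_mult; auto.
  - apply torus_continuous_abs; auto.
  - intros y _ _. rewrite Rabs_mult.
    assert (Rabs (cos (2 * PI * dot d y m)) <= 1) by (apply Rabs_le, COS_bound).
    pose proof (Rabs_pos (f y)). pose proof (Rabs_pos (cos (2 * PI * dot d y m))). nra.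
Qed.

(** * A lower bound for [f] from the signs of its Fourier coefficients *)

Definition low_ind (k : nat) (v : Z) : R := if Z.ltb (Z.abs v) (Z.of_nat k) then 1 else 0.

Lemma low_ind_opp k v : low_ind k (- v) = low_ind k v.
Proof. unfold low_ind. rewrite Z.abs_opp. auto. Qed.

Lemma sum_ltb_indicator N k :
  sum_f_R0 (fun n => if Nat.ltb n k then 1 else 0) N = INR (Nat.min k (S N)).
Proof.
  induction N.
  - simpl. destruct k as [|[|]]; simpl; auto.
  - simpl sum_f_R0. rewrite IHN. destruct (Nat.ltb_spec (S N) k).
    + replace (Nat.min k (S N)) with (S N) by lia.
      replace (Nat.min k (S (S N))) with (S (S N)) by lia. rewrite (S_INR (S N)). ring.
    + replace (Nat.min k (S (S N))) with (Nat.min k (S N)) by lia. ring.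
Qed.

Lemma cos_poly_low_ind N k : (1 <= k)%nat -> (k <= S N)%nat ->
  cos_poly (low_ind k) N 0 = 2 * INR k - 1.
Proof.
  intros Hk1 Hk. unfold cos_poly.
  rewrite (sum_eq _ (fun i => low_ind k (centered N i)))
    by (intros; rewrite Rmult_0_l, Rmult_0_r, cos_0; ring).
  rewrite (sum_centered (low_ind k)).
  rewrite (sum_eq _ (fun n => 2 * (if Nat.ltb n k then 1 else 0) + 0 * 0)).
  - rewrite sum_f_R0_lin, sum_ltb_indicator, Nat.min_l by auto. unfold low_ind. simpl.
    destruct (Z.ltb_spec 0 (Z.of_nat k)); [ring | lia].
  - intros i _. rewrite low_ind_opp. unfold low_ind. rewrite (Z.abs_eq (Z.of_nat i)) by lia.
    destruct (Nat.ltb_spec i k), (Z.ltb_spec (Z.of_nat i) (Z.of_nat k)); try lia; ring.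
Qed.

(* The number [(2k - 1)^d] of frequencies [m] with [max_j |m_j| < k]. *)
Lemma boxsum_low_ind d N k : (1 <= k)%nat -> (k <= S N)%nat ->
  boxsum d N (coef_prod (low_ind k) d) (fun _ => 0%Z) = (2 * INR k - 1) ^ d.
Proof.
  intros Hk1 Hk.
  destruct (boxsum_cos_prod (low_ind k) N (fun _ => 0) (low_ind_opp k) d (fun _ => 0%Z)) as [E _].
  rewrite (functional_extensionality (coef_prod (low_ind k) d)
    (fun m => coef_prod (low_ind k) d m * cos (2 * PI * dot d (fun _ => 0) m)))
    by (intros m; rewrite dot_0_l, Rmult_0_r, cos_0; ring).
  rewrite E, (prodR_ext d _ (fun _ => 2 * INR k - 1)) by (intros; apply cos_poly_low_ind; auto).
  apply prodR_const.
Qed.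

Lemma coef_prod_low_ind_1 d k m : ~ maxabs_ge d m k -> coef_prod (low_ind k) d m = 1.
Proof.
  intros H. unfold coef_prod. rewrite (prodR_ext d _ (fun _ => 1)), prodR_const, pow1; auto.
  intros j Hj. unfold low_ind. destruct (Z.ltb_spec (Z.abs (m j)) (Z.of_nat k)); auto.
  exfalso. apply H. exists j. split; auto. lia.
Qed.

Lemma coef_prod_low_ind_nonneg d k m : 0 <= coef_prod (low_ind k) d m.
Proof. apply prodR_nonneg. intros. unfold low_ind. destruct (Z.ltb _ _); lra. Qed.

(* One Fourier mode: either its coefficient has the sign [s], or it is a low
   mode, counted in [L], whose coefficient is at most [I] in size. *)
Lemma fourier_term_lower_bound s C cs fh I L : (s = 1 \/ s = -1) ->
  0 <= C <= 1 -> -1 <= cs <= 1 -> Rabs fh <= I -> 0 <= L ->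
  (s * fh >= 0 \/ L = 1) -> C * cs * fh >= - s * (C * fh) - 2 * I * L.
Proof.
  intros Hs HC Hcs Hfh HL Hcase.
  assert (Hterm : Rabs (C * cs * fh) <= C * Rabs fh).
  { rewrite !Rabs_mult, (Rabs_right C) by lra.
    assert (Rabs cs <= 1) by (apply Rabs_le; lra).
    rewrite Rmult_comm, <- Rmult_assoc, (Rmult_comm _ C).
    pose proof (Rabs_pos fh). pose proof (Rabs_pos cs).
    assert (0 <= C * Rabs fh) by (apply Rmult_le_pos; lra). nra. }
  pose proof (Rle_abs (- (C * cs * fh))) as Hneg. rewrite Rabs_Ropp in Hneg.
  assert (HCfh : C * Rabs fh <= Rabs fh) by (pose proof (Rabs_pos fh); nra).
  assert (HsC : - s * (C * fh) <= C * Rabs fh).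
  { pose proof (Rle_abs fh). pose proof (Rle_abs (- fh)). rewrite Rabs_Ropp in *.
    destruct Hs as [-> | ->]; nra. }
  destruct Hcase as [Hhigh | ->].
  - assert (Rabs fh = s * fh)
      by (destruct Hs as [-> | ->]; [rewrite Rabs_right | rewrite Rabs_left1]; lra).
    assert (0 <= I * L) by (apply Rmult_le_pos; [pose proof (Rabs_pos fh) |]; lra).
    destruct Hs as [-> | ->]; nra.
  - lra.
Qed.

Lemma fejer_mean_sym_lower d N f k s x : torus_continuous d f -> (s = 1 \/ s = -1) ->
  (1 <= k)%nat -> (k <= S N)%nat ->
  (forall m, maxabs_ge d m k -> s * fhat_re d f m >= 0) ->
  fejer_mean_sym d N f x >= - s * fejer_mean_sym d N f (fun _ => 0)
                            - 2 * torus_int d (fun y => Rabs (f y)) * (2 * INR k - 1) ^ d.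
Proof.
  intros Hf Hs Hk1 Hk Hhigh.
  rewrite !fejer_mean_sym_fourier, <- (boxsum_low_ind d N k) by auto.
  set (I := torus_int d (fun y => Rabs (f y))).
  set (C := coef_prod (fejer_coef N) d).
  match goal with |- _ >= - s * boxsum d N ?F _ - _ =>
    replace (- s * boxsum d N F (fun _ => 0%Z) - 2 * I * boxsum d N (coef_prod (low_ind k) d)
               (fun _ => 0%Z))
      with (boxsum d N (fun m => - s * F m + - (2 * I) * coef_prod (low_ind k) d m)
              (fun _ => 0%Z)) by (rewrite boxsum_lin; ring) end.
  apply Rle_ge, boxsum_le. intros m.
  rewrite dot_0_l, Rmult_0_r, cos_0, Rmult_1_r.
  apply Rge_le. eapply Rge_trans; [apply (fourier_term_lower_bound s (C m) _ _ I
    (coef_prod (low_ind k) d m))|]; auto.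
  - apply prodR_unit_interval. intros; apply fejer_coef_bounds.
  - apply COS_bound.
  - apply fhat_re_bound, Hf.
  - apply coef_prod_low_ind_nonneg.
  - destruct (classic (maxabs_ge d m k)) as [Hm|Hm]; [left; auto | right].
    apply coef_prod_low_ind_1, Hm.
  - right. ring.
Qed.

Section SymmetricFejerMeans.
Variables (d : nat) (f : (nat -> R) -> R).
Hypotheses (Hd : (1 <= d)%nat) (Hf : torus_fun d f) (Hc : torus_continuous d f)
  (He : even_fun f).

Lemma fejer_mean_sym_converges x : cube d x -> forall eps, 0 < eps ->
  exists N0, forall N, (N0 <= N)%nat -> Rabs (fejer_mean_sym d N f x - f x) <= eps.
Proof.
  intros Hx eps Heps.
  assert (Hx' : cube d (fun j => - x j)) by (intros j Hj; specialize (Hx j Hj); lra).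
  destruct (fejer_mean_converges d f Hd Hf Hc x Hx eps Heps) as [N1 H1].
  destruct (fejer_mean_converges d f Hd Hf Hc (fun j => - x j) Hx' eps Heps) as [N2 H2].
  exists (Nat.max N1 N2). intros N HN.
  specialize (H1 N ltac:(lia)). specialize (H2 N ltac:(lia)). rewrite He in H2.
  unfold fejer_mean_sym, torus_int in *.
  replace (fun y => f y * ((fejer_prod d N x y + fejer_prod d N (fun j => - x j) y) / 2))
    with (fun y => 1/2 * (f y * fejer_prod d N x y) + 1/2 * (f y * fejer_prod d N (fun j => - x j) y))
    by (apply functional_extensionality; intros; field).
  rewrite (integ_lin d); try (apply torus_continuous_mult; auto; apply torus_continuous_fejer_prod).
  set (a := integ d (fun y => f y * fejer_prod d N x y) (fun _ => 0)) in *.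
  set (b := integ d (fun y => f y * fejer_prod d N (fun j => - x j) y) (fun _ => 0)) in *.
  replace (1/2 * a + 1/2 * b - f x) with (1/2 * (a - f x) + 1/2 * (b - f x)) by field.
  eapply Rle_trans. apply Rabs_triang. rewrite !Rabs_mult, (Rabs_right (1/2)) by lra. lra.
Qed.

Lemma torus_int_abs_eq0 : torus_int d (fun y => Rabs (f y)) = 0 -> forall x, f x = 0.
Proof.
  intros HI x. destruct (torus_fun_cube d f Hf x) as [y [Hy <-]].
  assert (Hfh : forall m, fhat_re d f m = 0).
  { intros m. pose proof (fhat_re_bound d f m Hc). rewrite HI in H.
    apply Rabs_le_between in H. lra. }
  assert (Hmean : forall N, fejer_mean_sym d N f y = 0).
  { intros N. rewrite fejer_mean_sym_fourier by auto.
    rewrite <- (boxsum_zero d N (fun _ => 0%Z)). f_equal.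
    apply functional_extensionality; intros m. rewrite Hfh. ring. }
  assert (Hsmall : Rabs (f y) <= 0).
  { apply Rle_plus_epsilon. intros eps Heps.
    destruct (fejer_mean_sym_converges y Hy eps Heps) as [N0 HN0].
    specialize (HN0 N0 (le_n _)). rewrite Hmean, Rminus_0_l, Rabs_Ropp in HN0. lra. }
  apply Rabs_le_between in Hsmall. lra.
Qed.

Lemma lower_bound_from_spectrum s k : (s = 1 \/ s = -1) -> (1 <= k)%nat ->
  (forall m, maxabs_ge d m k -> s * fhat_re d f m >= 0) -> s * f (fun _ => 0) <= 0 ->
  forall x, cube d x -> f x >= - (2 * torus_int d (fun y => Rabs (f y)) * (2 * INR k - 1) ^ d).
Proof.
  intros Hs Hk Hhigh Hs0 x Hx.
  apply Rle_ge, Rle_plus_epsilon. intros eps Heps.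
  assert (H0 : cube d (fun _ => 0)) by (intros j _; lra).
  destruct (fejer_mean_sym_converges x Hx (eps/2) ltac:(lra)) as [N1 H1].
  destruct (fejer_mean_sym_converges (fun _ => 0) H0 (eps/2) ltac:(lra)) as [N2 H2].
  set (N := Nat.max k (Nat.max N1 N2)).
  specialize (H1 N ltac:(unfold N; lia)). specialize (H2 N ltac:(unfold N; lia)).
  assert (HM := fejer_mean_sym_lower d N f k s x Hc Hs Hk ltac:(unfold N; lia) Hhigh).
  apply Rabs_le_between in H1. apply Rabs_le_between in H2.
  destruct Hs as [-> | ->]; lra.
Qed.

Lemma torus_int_abs_pos : (exists x, f x <> 0) -> 0 < torus_int d (fun y => Rabs (f y)).
Proof.
  intros [x Hx].
  assert (H0 : 0 <= torus_int d (fun y => Rabs (f y))).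
  { unfold torus_int. rewrite <- (integ_const d 0 (fun _ => 0)) at 1.
    apply (integ_le d); [apply torus_continuous_const | apply torus_continuous_abs; auto |].
    intros; apply Rabs_pos. }
  destruct H0 as [|H0]; auto.
  exfalso. apply Hx, torus_int_abs_eq0. auto.
Qed.

End SymmetricFejerMeans.

(** * The volume of the region where [f] may be negative *)

Definition clamp01 (u : R) : R := (Rabs u - Rabs (u - 1) + 1) / 2.

Lemma clamp01_spec u :
  0 <= clamp01 u <= 1 /\ (u <= 0 -> clamp01 u = 0) /\ (1 <= u -> clamp01 u = 1).
Proof.
  unfold clamp01, Rabs.
  destruct (Rcase_abs u), (Rcase_abs (u - 1)); repeat split; intros; lra.
Qed.

Lemma clamp01_lipschitz u v : Rabs (clamp01 u - clamp01 v) <= Rabs (u - v).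
Proof.
  unfold clamp01. pose proof (Rabs_triang_inv2 u v).
  pose proof (Rabs_triang_inv2 (u - 1) (v - 1)).
  replace ((u - 1) - (v - 1)) with (u - v) in H0 by ring.
  replace ((Rabs u - Rabs (u - 1) + 1) / 2 - (Rabs v - Rabs (v - 1) + 1) / 2)
    with ((Rabs u - Rabs v) / 2 - (Rabs (u - 1) - Rabs (v - 1)) / 2) by field.
  eapply Rle_trans. apply Rabs_triang. rewrite Rabs_Ropp. unfold Rdiv. rewrite !Rabs_mult.
  rewrite (Rabs_right (/ 2)) by lra. lra.
Qed.

Definition plateau (a e t : R) : R := clamp01 ((a - Rabs t) / e).

Lemma continuity_pt_plateau a e t : 0 < e -> continuity_pt (plateau a e) t.
Proof.
  intros He. apply continuity_pt_iff. intros eps Heps. exists (eps * e). split. nra.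
  intros u Hu. unfold plateau. eapply Rle_lt_trans. apply clamp01_lipschitz.
  replace ((a - Rabs u) / e - (a - Rabs t) / e) with ((Rabs t - Rabs u) / e) by (field; lra).
  unfold Rdiv. rewrite Rabs_mult, (Rabs_right (/ e)) by (left; apply Rinv_0_lt_compat; auto).
  pose proof (Rabs_triang_inv2 t u). rewrite (Rabs_minus_sym t u) in H.
  apply Rmult_lt_reg_r with e; auto. rewrite Rmult_assoc, Rinv_l, Rmult_1_r by lra. lra.
Qed.

Lemma plateau_eq1 a e t : 0 < e -> Rabs t <= a - e -> plateau a e t = 1.
Proof.
  intros He Ht. apply clamp01_spec.
  apply Rmult_le_reg_r with e; auto. unfold Rdiv. rewrite Rmult_assoc, Rinv_l by lra. lra.
Qed.

Lemma plateau_eq0 a e t : 0 < e -> a <= Rabs t -> plateau a e t = 0.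
Proof.
  intros He Ht. apply clamp01_spec.
  apply Rmult_le_reg_r with e; auto. unfold Rdiv. rewrite Rmult_assoc, Rinv_l by lra. lra.
Qed.

Lemma Ihalf_plateau a e : 0 < e -> 0 < a -> 0 <= Ihalf (plateau a e) <= 2 * a.
Proof.
  intros He Ha.
  assert (Hc : forall t, continuity_pt (plateau a e) t) by (intros; apply continuity_pt_plateau; auto).
  split.
  { rewrite <- (Ihalf_const 0). apply Ihalf_le; auto.
    - intros; apply continuity_pt_constant.
    - intros t _. apply clamp01_spec. }
  destruct (Rle_dec (1/2) a).
  { eapply Rle_trans. apply Ihalf_le with (h2 := fun _ => 1); auto.
    - intros; apply continuity_pt_constant.
    - intros t _. apply clamp01_spec.
    - rewrite Ihalf_const. lra. }
  assert (Ex : forall u v, ex_RInt (plateau a e) u v) by (intros; apply ex_RInt_continuity; auto).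
  assert (Hzero : forall u v, u <= v -> (forall t, u <= t <= v -> a <= Rabs t) ->
            RInt (plateau a e) u v = 0).
  { intros u v Huv H. rewrite (RInt_ext _ (fun _ => 0)).
    - rewrite RInt_const. unfold scal; simpl; unfold mult; simpl. ring.
    - intros t Ht. rewrite Rmin_left, Rmax_right in Ht by lra. apply plateau_eq0; auto. apply H; lra. }
  assert (Hmid : RInt (plateau a e) (-a) a <= 2 * a).
  { eapply Rle_trans. apply RInt_le with (g := fun _ => 1); auto. lra.
    - apply ex_RInt_continuity; intros; apply continuity_pt_constant.
    - intros t _. apply clamp01_spec.
    - rewrite RInt_const. unfold scal; simpl; unfold mult; simpl. lra. }
  rewrite Ihalf_RInt by auto.
  rewrite <- (RInt_Chasles (V:=R_CompleteNormedModule) (plateau a e) (-(1/2)) (-a) (1/2)),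
    <- (RInt_Chasles (V:=R_CompleteNormedModule) (plateau a e) (-a) a (1/2)); auto.
  rewrite (Hzero (-(1/2)) (-a)), (Hzero a (1/2)).
  - unfold plus; simpl. lra.
  - lra.
  - intros t Ht. rewrite Rabs_right; lra.
  - lra.
  - intros t Ht. rewrite Rabs_left; lra.
Qed.

Lemma tdist_small t : -(1/2) <= t <= 1/2 -> tdist t = Rabs t.
Proof.
  intros Ht. unfold tdist, frac_part. destruct (base_Int_part t) as [H1 H2].
  destruct (Rle_dec 0 t).
  - assert (Int_part t = 0%Z).
    { assert (IZR (Int_part t) < 1) by lra. assert (IZR (Int_part t) > -1) by lra.
      apply lt_IZR in H. apply Rlt_gt, lt_IZR in H0. lia. }
    rewrite H. simpl. rewrite Rabs_right by lra. unfold Rmin.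
    destruct (Rle_dec (t - 0) (1 - (t - 0))); lra.
  - assert (Int_part t = (-1)%Z).
    { assert (IZR (Int_part t) < 0) by lra. assert (IZR (Int_part t) > -2) by lra.
      apply lt_IZR in H. apply Rlt_gt, lt_IZR in H0. lia. }
    rewrite H, Rabs_left by lra. unfold Rmin.
    destruct (Rle_dec (t - -1) (1 - (t - -1))); lra.
Qed.

Lemma fhat_re_0 d f : fhat_re d f (fun _ => 0%Z) = torus_int d f.
Proof.
  unfold fhat_re. f_equal. apply functional_extensionality; intros y.
  rewrite dot_0_r, Rmult_0_r, cos_0. ring.
Qed.

(* [|f| = f + 2 f^-], and [f^-] lives in the cube of half-side [r], where it is
   dominated by [M] times a product of plateaus. *)
Lemma torus_int_abs_le_negative_part d f r M e :
  torus_continuous d f -> 0 < r -> 0 < e -> 0 <= M ->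
  (forall x, dinf0_ge d x r -> f x >= 0) -> (forall x, cube d x -> f x >= - M) ->
  torus_int d f <= 0 ->
  torus_int d (fun y => Rabs (f y)) <= 2 * M * (2 * (r + e)) ^ d.
Proof.
  intros Hc Hr He HM Hpos Hlow Hint.
  set (a := r + e).
  set (fneg := fun y => (Rabs (f y) - f y) / 2).
  assert (Tneg : torus_continuous d fneg).
  { apply torus_continuous_mult. apply torus_continuous_minus; auto.
    apply torus_continuous_abs; auto. apply torus_continuous_const. }
  set (box := fun y => prodR d (fun j => plateau a e (y j))).
  assert (Tbox : torus_continuous d box).
  { apply (torus_continuous_prodR d d (fun j y => plateau a e (y j))). intros j Hj.
    apply (torus_continuous_comp d (plateau a e)).
    intros; apply continuity_pt_plateau; auto. apply torus_continuous_coord; auto. }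
  assert (Eabs : torus_int d (fun y => Rabs (f y)) = torus_int d f + 2 * torus_int d fneg).
  { unfold torus_int. transitivity (integ d (fun y => 1 * f y + 2 * fneg y) (fun _ => 0)).
    - f_equal. apply functional_extensionality; intros y. unfold fneg. field.
    - rewrite (integ_lin d); auto. ring. }
  assert (Hneg : torus_int d fneg <= M * torus_int d box).
  { unfold torus_int. rewrite <- (integ_scal d) by auto. apply (integ_le d); auto.
    { apply torus_continuous_mult; auto. apply torus_continuous_const. }
    intros y Hy _. unfold fneg, box. destruct (Rle_dec 0 (f y)).
    - rewrite Rabs_right by lra. replace ((f y - f y) / 2) with 0 by field.
      apply Rmult_le_pos; auto. apply prodR_nonneg. intros; apply clamp01_spec.
    - rewrite (prodR_ext d _ (fun _ => 1)), prodR_const, pow1.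
      + rewrite Rabs_left by lra. specialize (Hlow y Hy). lra.
      + intros j Hj. apply plateau_eq1; auto. rewrite <- tdist_small by (apply Hy; auto).
        destruct (Rlt_le_dec (tdist (y j)) r); [unfold a; lra|].
        exfalso. assert (f y >= 0) by (apply Hpos; exists j; split; auto; lra). lra. }
  assert (Hbox : torus_int d box <= (2 * a) ^ d).
  { unfold torus_int, box. rewrite (integ_prodR d (fun _ => plateau a e)), prodR_const.
    - apply pow_incr, Ihalf_plateau; unfold a; lra.
    - intros; apply continuity_pt_plateau; auto. }
  assert (M * torus_int d box <= M * (2 * a) ^ d) by (apply Rmult_le_compat_l; auto).
  lra.
Qed.

Lemma rpower_le_of_pow_ge (u : R) (d : nat) : (1 <= d)%nat -> 0 < u ->
  1 <= 4 * u ^ d -> Rpower 2 (- (2 / INR d)) <= u.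
Proof.
  intros Hd Hu H.
  assert (HdR : 0 < INR d) by (apply lt_0_INR; lia).
  assert (Hroot : Rpower (u ^ d) (/ INR d) = u).
  { rewrite <- Rpower_pow, Rpower_mult, Rinv_r, Rpower_1 by lra; auto. }
  assert (Hquarter : Rpower (/ 4) (/ INR d) = Rpower 2 (- (2 / INR d))).
  { replace (/ 4) with (Rpower 2 (- INR 2))
      by (rewrite Rpower_Ropp, Rpower_pow by lra; simpl; field).
    rewrite Rpower_mult. f_equal. simpl. field. lra. }
  rewrite <- Hquarter, <- Hroot.
  apply Rle_Rpower_l; [left; apply Rinv_0_lt_compat; auto | lra].
Qed.

Lemma rpower_bound_of_volume_bound (I r c : R) (d : nat) : (1 <= d)%nat -> 0 < I ->
  0 < r -> 1 <= c ->
  (forall e, 0 < e -> I <= 2 * (2 * I * c ^ d) * (2 * (r + e)) ^ d) ->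
  r * c >= Rpower 2 (- (1 + 4 / INR d)).
Proof.
  intros Hd HI Hr Hc H.
  assert (HdR : 0 < INR d) by (apply lt_0_INR; lia).
  set (q := Rpower 2 (- (2 / INR d))).
  assert (Hq : q <= 2 * r * c).
  { apply Rle_plus_epsilon. intros eps Heps.
    set (e := eps / (2 * c)).
    assert (He : 0 < e) by (apply Rdiv_lt_0_compat; lra).
    replace (2 * r * c + eps) with (2 * (r + e) * c) by (unfold e; field; lra).
    apply rpower_le_of_pow_ge; auto; [nra|].
    specialize (H e He). rewrite Rpow_mult_distr.
    set (X := (2 * (r + e)) ^ d * c ^ d).
    replace (2 * (2 * I * c ^ d) * (2 * (r + e)) ^ d) with (I * (4 * X)) in H by (unfold X; ring).
    nra. }
  assert (Ehalf : Rpower 2 (- (1 + 2 / INR d)) = q / 2).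
  { assert (0 < Rpower 2 (2 / INR d)) by apply exp_pos.
    unfold q. rewrite !Rpower_Ropp, Rpower_plus, Rpower_1 by lra. field. lra. }
  assert (Hmono : Rpower 2 (- (1 + 4 / INR d)) <= Rpower 2 (- (1 + 2 / INR d))).
  { apply Rle_Rpower. lra.
    assert (2 / INR d <= 4 / INR d)
      by (unfold Rdiv; apply Rmult_le_compat_r; [left; apply Rinv_0_lt_compat|]; lra).
    lra. }
  lra.
Qed.

Theorem mainTheorem13 (s : R) (d : nat) (f : (nat -> R) -> R) (r : R) (k : nat) :
  (s = 1 \/ s = -1) ->
  (1 <= d)%nat ->
  torus_fun d f ->
  torus_continuous d f ->
  even_fun f ->
  (exists x, f x <> 0) ->
  fhat_l1 d f ->
  0 < r -> r <= 1 ->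
  (1 <= k)%nat ->
  (forall x, dinf0_ge d x r -> f x >= 0) ->
  (fhat_im d f (fun _ => 0%Z) = 0 /\ fhat_re d f (fun _ => 0%Z) <= 0) ->
  (forall m, maxabs_ge d m k -> fhat_im d f m = 0 /\ s * fhat_re d f m >= 0) ->
  s * f (fun _ => 0) <= 0 ->
  r * (2 * INR k - 1) >= Rpower 2 (- (1 + 4 / INR d)).
Proof.
  intros Hs Hd Hf Hc He Hnz _ Hr _ Hk Hpos [_ Hmean] Hhigh Hs0.
  set (I := torus_int d (fun y => Rabs (f y))).
  assert (Hk1 : 1 <= 2 * INR k - 1) by (apply le_INR in Hk; simpl in Hk; lra).
  assert (Hlow := lower_bound_from_spectrum d f Hd Hf Hc He s k Hs Hk
                    (fun m Hm => proj2 (Hhigh m Hm)) Hs0).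
  assert (HI : 0 < I) by (apply torus_int_abs_pos; auto).
  apply (rpower_bound_of_volume_bound I); auto.
  intros e He'. apply (torus_int_abs_le_negative_part d f r); auto.
  - apply Rmult_le_pos; [lra | apply pow_le; lra].
  - rewrite <- fhat_re_0. auto.
Qed.
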